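(* Assume conditions (C1)–(C6) and fix $\zeta\in\Theta$. Let $\varphi_\zeta$ be the bounded solution of the network $(N_\zeta)$ on $\mathbb T_0$ defined below. Then for every $t^0\in\mathbb T_0$ and every solution $x$ of $(N_\zeta)$ on $\mathbb T_0\cap[t^0,\infty)$ one has $\|x(t)-\varphi_\zeta(t)\|\to0$ as $t\to\infty$, $t\in\mathbb T_0$.
   Context: Fix integers $m,n\ge1$ and $r\ge0$. Cells are indexed by pairs $(i,j)$, $1\le i\le m$, $1\le j\le n$. The $r$-neighbourhood of $(i,j)$ is $N_r(i,j)=\{(h,l):1\le h\le m,\ 1\le l\le n,\ \max(|h-i|,|l-j|)\le r\}$. Fix constants $a_{ij}>0$, $C^{hl}_{ij}\ge0$, and a continuous function $f:\mathbb R\to\mathbb R$. Vectors of $\mathbb R^{mn}$ are written $v=\{v_{ij}\}$, with norm $\|v\|=\max_{(i,j)}|v_{ij}|$. Time scale: $\{\theta_k\}_{k\in\mathbb Z}$ is strictly increasing, $\theta_{-1}<0<\theta_0$, and there exist $\omega>0$ and $p\in\mathbb N$ with $\theta_{k+2p}=\theta_k+\omega$ for all $k$. Set $\mathbb T_0=\bigcup_{k\in\mathbb Z}[\theta_{2k-1},\theta_{2k}]$, $\delta_k=\theta_{2k+1}-\theta_{2k}$, $\eta_k=\theta_{2k}-\theta_{2k-1}$ (both $p$-periodic in $k$), $\delta=\max_{1\le k\le p}\delta_k$. On $\mathbb T_0'=\mathbb T_0\setminus\{\theta_{2k-1}:k\in\mathbb Z\}$ define $\psi(t)=t-\sum_{0<\theta_{2k}<t}\delta_k$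 for $t\ge0$ and $\psi(t)=t+\sum_{t\le\theta_{2k}<0}\delta_k$ for $t<0$; put $s_k=\psi(\theta_{2k})$, so $s_k-s_{k-1}=\eta_k$, and write $\psi(\omega):=\omega-\sum_{k=1}^p\delta_k=\sum_{k=1}^p\eta_k$, so $s_{k+p}=s_k+\psi(\omega)$. Inputs: $\Lambda\subset\mathbb R^{mn}$ is compact and $F:\Lambda\to\Lambda$ is continuous. $\Theta$ is the set of all sequences $\zeta=\{\zeta_k\}_{k\in\mathbb Z}$, $\zeta_k=\{\zeta^{ij}_k\}\in\Lambda$, with $\zeta_{k+1}=F(\zeta_k)$ for all $k\in\mathbb Z$. For $\zeta\in\Theta$, $L_{ij}(t,\zeta)=\zeta^{ij}_k$ for $t\in[\theta_{2k-1},\theta_{2k}]$. Network $(N_\zeta)$ on $\mathbb T_0$: $x^\Delta_{ij}(t)=-a_{ij}x_{ij}(t)-\sum_{(h,l)\in N_r(i,j)}C^{hl}_{ij}f(x_{hl}(t))x_{ij}(t)+L_{ij}(t,\zeta)$, $t\in\mathbb T_0$, where the $\Delta$-derivative at $\theta_{2k}$ is $(x(\theta_{2k+1})-x(\theta_{2k}))/\delta_k$ and elsewhere the ordinary derivative. Concretely, a solution on $\mathbb T_0$ (or on $\mathbb T_0\cap[t^0,\infty)$) is a function continuous and (one-sidedly at endpoints) differentiable on each interval $[\theta_{2k-1},\theta_{2k}]$ of its domain satisfying there $x_{ij}'=-a_{ij}x_{ij}-\sum_{(h,l)\in N_r(i,j)}C^{hl}_{ij}f(x_{hl})x_{ij}+\zeta^{ij}_k$,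 together with $x_{ij}(\theta_{2k+1})=(1-\delta_ka_{ij})x_{ij}(\theta_{2k})-\delta_k\sum_{(h,l)\in N_r(i,j)}C^{hl}_{ij}f(x_{hl}(\theta_{2k}))x_{ij}(\theta_{2k})+\delta_k\zeta^{ij}_k$. Impulsive system $(I_\zeta)$: for $s\in(s_{k-1},s_k)$, $y_{ij}'(s)=-a_{ij}y_{ij}(s)-\sum_{(h,l)\in N_r(i,j)}C^{hl}_{ij}f(y_{hl}(s))y_{ij}(s)+\zeta^{ij}_k$, and at $s=s_k$, $y_{ij}(s_k+)-y_{ij}(s_k)=-\delta_ka_{ij}y_{ij}(s_k)-\delta_k\sum_{(h,l)\in N_r(i,j)}C^{hl}_{ij}f(y_{hl}(s_k))y_{ij}(s_k)+\delta_k\zeta^{ij}_k$. Solutions are left-continuous, continuous except for discontinuities of the first kind at the $s_k$. Let $u_{ij}(s,\tau)=e^{-a_{ij}(s-\tau)}\prod_{\nu=l}^{k}(1-\delta_\nu a_{ij})$ if $s_{l-1}<\tau\le s_l$, $s_k<s\le s_{k+1}$, $k\ge l$, and $u_{ij}(s,\tau)=e^{-a_{ij}(s-\tau)}$ if $s_k<\tau\le s\le s_{k+1}$. Let $\lambda_{ij}=a_{ij}-\frac1{\psi(\omega)}\sum_{\nu=0}^{p-1}\ln|1-\delta_\nu a_{ij}|$, $\lambda=\min_{(i,j)}\lambda_{ij}$. Conditions: (C1) $\delta_ka_{ij}\ne1$ for all $i,j,k$; (C2) $\lambda>0$; (C3) $\sup_{s\in\mathbb R}|f(s)|\le M_f$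 for some $M_f>0$; (C4) $|f(s_1)-f(s_2)|\le L_f|s_1-s_2|$ for all $s_1,s_2$, for some $L_f>0$. Under (C1),(C2) fix positive numbers $K_{ij}$ with $|u_{ij}(s,\tau)|\le K_{ij}e^{-\lambda_{ij}(s-\tau)}$ for $s\ge\tau$. Define $\bar c=\max_{(i,j)}\big(\frac{K_{ij}}{\lambda_{ij}}+\frac{p\delta K_{ij}}{1-e^{-\lambda_{ij}\psi(\omega)}}\big)\sum_{(h,l)\in N_r(i,j)}C^{hl}_{ij}$, $M_F=\max_{\eta\in\Lambda}\|F(\eta)\|$, $H_0=\frac{M_F}{1-M_f\bar c}\max_{(i,j)}\big(\frac{K_{ij}}{\lambda_{ij}}+\frac{p\delta K_{ij}}{1-e^{-\lambda_{ij}\psi(\omega)}}\big)$, $\bar d=(M_f+H_0L_f)\max_{(i,j)}K_{ij}\sum_{(h,l)\in N_r(i,j)}C^{hl}_{ij}$. (C5) $(M_f+H_0L_f)\bar c<1$. (C6) $-\lambda+\bar d+\frac{p}{\psi(\omega)}\ln(1+\delta\bar d)<0$. Under (C1)–(C5), for $\zeta\in\Theta$ the system $(I_\zeta)$ has a unique solution $\phi_\zeta$ on $\mathbb R$ with $\sup_s\|\phi_\zeta(s)\|\le H_0$; define $\varphi_\zeta:\mathbb T_0\to\mathbb R^{mn}$ by $\varphi_\zeta(t)=\phi_\zeta(\psi(t))$ for $t\in\mathbb T_0'$ and $\varphi_\zeta(\theta_{2k+1})=\phi_\zeta(s_k+)$. Then $\varphi_\zeta$ is the unique solution of $(N_\zeta)$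 on $\mathbb T_0$ with $\sup_{t\in\mathbb T_0}\|\varphi_\zeta(t)\|\le H_0$. *)

From Stdlib Require Import Reals Lra Lia ZArith List.
Open Scope R_scope.

(* Vectors of R^{mn}: functions of the cell indices (i,j); only the entries
   with 1 <= i <= m, 1 <= j <= n are meaningful. *)
Definition vec := nat -> nat -> R.

Definition in_cell (m n i j : nat) : Prop := (1 <= i <= m)%nat /\ (1 <= j <= n)%nat.

Definition cells (m n : nat) : list (nat * nat) :=
  flat_map (fun i => map (fun j => (i, j)) (seq 1 n)) (seq 1 m).

(* max / min over all cells (exact max/min when m,n >= 1) *)
Definition cellmax (m n : nat) (g : nat -> nat -> R) : R :=
  fold_right (fun c acc => Rmax (g (fst c) (snd c)) acc) (g 1%nat 1%nat) (cells m n).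
Definition cellmin (m n : nat) (g : nat -> nat -> R) : R :=
  fold_right (fun c acc => Rmin (g (fst c) (snd c)) acc) (g 1%nat 1%nat) (cells m n).

Definition vnorm (m n : nat) (v : vec) : R := cellmax m n (fun i j => Rabs (v i j)).
Definition vsub (u v : vec) : vec := fun i j => u i j - v i j.

Definition natdist (a b : nat) : nat := ((a - b) + (b - a))%nat.

Definition nbsum (m n r i j : nat) (g : nat -> nat -> R) : R :=
  fold_right (fun c acc =>
    (if andb (Nat.leb (natdist (fst c) i) r) (Nat.leb (natdist (snd c) j) r)
     then g (fst c) (snd c) else 0) + acc) 0 (cells m n).

(* sum / product over integer range lo..hi (empty if hi < lo) *)
Definition sumZ (lo hi : Z) (g : Z -> R) : R :=
  fold_right (fun i acc => g (lo + Z.of_nat i)%Z + acc) 0 (seq 0 (Z.to_nat (hi - lo + 1))).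
Definition prodZ (lo hi : Z) (g : Z -> R) : R :=
  fold_right (fun i acc => g (lo + Z.of_nat i)%Z * acc) 1 (seq 0 (Z.to_nat (hi - lo + 1))).

Definition delta_k (th : Z -> R) (k : Z) : R := th (2 * k + 1)%Z - th (2 * k)%Z.
Definition eta_k (th : Z -> R) (k : Z) : R := th (2 * k)%Z - th (2 * k - 1)%Z.
Definition delta_max (th : Z -> R) (p : nat) : R :=
  fold_right (fun k acc => Rmax (delta_k th (Z.of_nat k)) acc) (delta_k th 1%Z) (seq 1 p).
Definition psi_omega (th : Z -> R) (p : nat) : R := sumZ 1 (Z.of_nat p) (eta_k th).
(* s_k = psi(theta_{2k}), written out from the definition of psi *)
Definition s_k (th : Z -> R) (k : Z) : R :=
  if (0 <=? k)%Z then th (2 * k)%Z - sumZ 0 (k - 1) (delta_k th)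
  else th (2 * k)%Z + sumZ k (-1) (delta_k th).
Definition inT0 (th : Z -> R) (t : R) : Prop :=
  exists k : Z, th (2 * k - 1)%Z <= t <= th (2 * k)%Z.

Definition lam_ij (th : Z -> R) (p : nat) (a : nat -> nat -> R) (i j : nat) : R :=
  a i j - / psi_omega th p *
    sumZ 0 (Z.of_nat p - 1) (fun nu => ln (Rabs (1 - delta_k th nu * a i j))).
Definition lam (m n : nat) th p a : R := cellmin m n (lam_ij th p a).

(* u_ij(s,tau) for s_{l-1} < tau <= s_l, s_k < s <= s_{k+1}
   (the product is empty when k = l-1, i.e. same interval) *)
Definition ufun (th : Z -> R) (a : nat -> nat -> R) (i j : nat) (l k : Z) (s tau : R) : R :=
  exp (- a i j * (s - tau)) * prodZ l k (fun nu => 1 - delta_k th nu * a i j).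

Definition Kfactor th p a (K : nat -> nat -> R) (i j : nat) : R :=
  K i j / lam_ij th p a i j
  + INR p * delta_max th p * K i j / (1 - exp (- lam_ij th p a i j * psi_omega th p)).
Definition Csum (m n r : nat) (C : nat -> nat -> nat -> nat -> R) (i j : nat) : R :=
  nbsum m n r i j (fun h l => C i j h l).
Definition cbar m n r th p a K C : R :=
  cellmax m n (fun i j => Kfactor th p a K i j * Csum m n r C i j).
Definition H0 m n r th p a K C (Mf MF : R) : R :=
  MF / (1 - Mf * cbar m n r th p a K C) * cellmax m n (fun i j => Kfactor th p a K i j).
Definition dbar m n r th p a K C (Mf Lf MF : R) : R :=
  (Mf + H0 m n r th p a K C Mf MF * Lf) * cellmax m n (fun i j => K i j * Csum m n r C i j).

Definition seq_compact (m n : nat) (Lam : vec -> Prop) : Prop :=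
  forall u : nat -> vec, (forall q, Lam (u q)) ->
  exists (sub : nat -> nat) (lim : vec),
    (forall q, (sub q < sub (S q))%nat) /\ Lam lim /\
    forall eps, 0 < eps -> exists N, forall q, (N <= q)%nat ->
      vnorm m n (vsub (u (sub q)) lim) < eps.
Definition cont_on (m n : nat) (Lam : vec -> Prop) (F : vec -> vec) : Prop :=
  forall v, Lam v -> forall eps, 0 < eps -> exists del, 0 < del /\
    forall w, Lam w -> vnorm m n (vsub w v) < del -> vnorm m n (vsub (F w) (F v)) < eps.

Definition net_rhs (m n r : nat) (a : nat -> nat -> R) (C : nat -> nat -> nat -> nat -> R)
  (f : R -> R) (v : vec) (i j : nat) : R :=
  - a i j * v i j - nbsum m n r i j (fun h l => C i j h l * f (v h l)) * v i j.

Definition has_deriv_within (g : R -> R) (lo hi t d : R) : Prop :=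
  forall eps, 0 < eps -> exists del, 0 < del /\
    forall h, h <> 0 -> Rabs h < del -> lo <= t + h <= hi ->
      Rabs ((g (t + h) - g t) / h - d) < eps.

Definition ode_piece m n r a C f (zeta : Z -> vec) (x : R -> vec) (lo hi : R) (k : Z) : Prop :=
  forall t, lo <= t <= hi -> forall i j, in_cell m n i j ->
    has_deriv_within (fun s => x s i j) lo hi t (net_rhs m n r a C f (x t) i j + zeta k i j).

Definition jump_cond m n r a C f (th : Z -> R) (zeta : Z -> vec) (x : R -> vec) (k : Z) : Prop :=
  forall i j, in_cell m n i j ->
    x (th (2 * k + 1)%Z) i j =
      (1 - delta_k th k * a i j) * x (th (2 * k)%Z) i j
      - delta_k th k * nbsum m n r i j (fun h l => C i j h l * f (x (th (2 * k)%Z) h l))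
          * x (th (2 * k)%Z) i j
      + delta_k th k * zeta k i j.

Definition sol_T0 m n r a C f th zeta (x : R -> vec) : Prop :=
  forall k : Z, ode_piece m n r a C f zeta x (th (2 * k - 1)%Z) (th (2 * k)%Z) k
             /\ jump_cond m n r a C f th zeta x k.

Definition sol_from m n r a C f th zeta (t0 : R) (x : R -> vec) : Prop :=
  forall k : Z, t0 <= th (2 * k)%Z ->
    ode_piece m n r a C f zeta x (Rmax t0 (th (2 * k - 1)%Z)) (th (2 * k)%Z) k
    /\ jump_cond m n r a C f th zeta x k.

(* Let z = x - phi_zeta.  Along each interval of T0 and across each jump, z obeys the linear
   part of the network plus a coupling term bounded by (Mf + H0 Lf) (sum of the C) |z|, since
   |phi_zeta| <= H0.  Variation of constants with the kernel u_ij(s, tau) <= K_ij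
   e^{-lambda_ij (s - tau)} and a continuous induction over the intervals after t0 keep |z| below
   the envelope B e^{(dbar - lambda)(psi(t) - s0)} (1 + delta dbar)^j on the j-th interval.  By
   (C6) the decay over a period psi(omega) beats the growth (1 + delta dbar)^p of its p jumps. *)

From Stdlib Require Import Reals ZArith.
From Stdlib Require Import Lra Lia List Classical.
Open Scope R_scope.

(** * Calculus on an interval *)

Lemma continuous_induction (lo hi : R) (P : R -> Prop) : lo <= hi ->
  (forall t, lo <= t <= hi -> (forall u, lo <= u < t -> P u) -> P t) ->
  (forall t, lo <= t < hi -> (forall u, lo <= u <= t -> P u) ->
     exists d, 0 < d /\ forall u, t < u < t + d -> u <= hi -> P u) ->
  forall t, lo <= t <= hi -> P t.
Proof.
  intros Hle Hclosed Hopen.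
  set (E := fun t => lo <= t <= hi /\ forall u, lo <= u <= t -> P u).
  assert (Elo : E lo).
  { split; [lra|]. intros u Hu. replace u with lo by lra.
    apply Hclosed; [lra|]. intros; lra. }
  assert (Eb : bound E) by (exists hi; intros y [Hy _]; lra).
  destruct (completeness E Eb (ex_intro _ lo Elo)) as [s [Hub Hlub]].
  assert (Hs1 : lo <= s) by (apply Hub; exact Elo).
  assert (Hs2 : s <= hi) by (apply Hlub; intros y [Hy _]; lra).
  assert (Hbelow : forall u, lo <= u < s -> P u).
  { intros u Hu.
    destruct (classic (exists y, E y /\ u < y)) as [[y [[_ Hy] Huy]]|Hno].
    - apply Hy; lra.
    - assert (s <= u); [|lra]. apply Hlub. intros y Ey.
      destruct (Rle_dec y u); [auto|]. exfalso; apply Hno; exists y; split; [auto|lra]. }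
  assert (Es : E s).
  { split; [lra|]. intros u Hu. destruct (Req_dec u s) as [->|]; [|apply Hbelow; lra].
    apply Hclosed; [lra|exact Hbelow]. }
  assert (Hshi : s = hi).
  { destruct (Req_dec s hi) as [|Hne]; [auto|]. exfalso.
    destruct (Hopen s ltac:(lra) (proj2 Es)) as [d [Hd Hext]].
    set (s' := Rmin (s + d/2) hi).
    assert (Hs' : s < s' <= hi /\ s' < s + d)
      by (unfold s', Rmin; destruct (Rle_dec (s + d/2) hi); lra).
    assert (Es' : E s').
    { split; [lra|]. intros u Hu. destruct (Rle_dec u s); [apply (proj2 Es); lra|].
      apply Hext; lra. }
    assert (s' <= s) by (apply Hub; exact Es'). lra. }
  intros t Ht. subst s. apply (proj2 Es). lra.
Qed.

Lemma has_deriv_within_continuous g lo hi t d : has_deriv_within g lo hi t d ->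
  forall eps, 0 < eps -> exists del, 0 < del /\
    forall u, lo <= u <= hi -> Rabs (u - t) < del -> Rabs (g u - g t) < eps.
Proof.
  intros H eps Heps. destruct (H 1 Rlt_0_1) as [d1 [Hd1 Hq]].
  assert (Hpos : 0 < Rabs d + 1) by (pose proof (Rabs_pos d); lra).
  exists (Rmin d1 (eps / (Rabs d + 1))).
  split; [apply Rmin_pos; [lra|apply Rdiv_lt_0_compat; lra]|].
  intros u Hu Hut. destruct (Req_dec u t) as [->|Hne].
  { rewrite Rminus_diag, Rabs_R0; lra. }
  assert (Hlt1 : Rabs (u - t) < d1) by (eapply Rlt_le_trans; [exact Hut|apply Rmin_l]).
  assert (Hlt2 : Rabs (u - t) < eps / (Rabs d + 1))
    by (eapply Rlt_le_trans; [exact Hut|apply Rmin_r]).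
  specialize (Hq (u - t) ltac:(lra) Hlt1). replace (t + (u - t)) with u in Hq by ring.
  specialize (Hq Hu).
  assert (Hq' : Rabs ((g u - g t) / (u - t)) < Rabs d + 1).
  { pose proof (Rabs_triang ((g u - g t) / (u - t) - d) d).
    replace ((g u - g t) / (u - t) - d + d) with ((g u - g t) / (u - t)) in H0 by ring. lra. }
  replace (g u - g t) with ((g u - g t) / (u - t) * (u - t)) by (field; lra).
  rewrite Rabs_mult.
  apply Rlt_le_trans with ((Rabs d + 1) * Rabs (u - t)).
  { apply Rmult_lt_compat_r; auto. apply Rabs_pos_lt; lra. }
  apply Rle_trans with ((Rabs d + 1) * (eps / (Rabs d + 1))).
  { apply Rmult_le_compat_l; lra. }
  right; field; lra.
Qed.

Lemma has_deriv_within_subinterval g lo hi lo' hi' t d : has_deriv_within g lo hi t d ->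
  lo <= lo' -> hi' <= hi -> has_deriv_within g lo' hi' t d.
Proof.
  intros H H1 H2 eps Heps. destruct (H eps Heps) as [del [Hd Hq]]. exists del; split; auto.
  intros h Hh Hh2 Hh3. apply Hq; auto; lra.
Qed.

Lemma derivable_pt_lim_has_deriv_within g t d lo hi :
  derivable_pt_lim g t d -> has_deriv_within g lo hi t d.
Proof.
  intros H eps Heps. destruct (H eps Heps) as [del Hq]. exists del. split; [apply cond_pos|].
  intros h Hh Hh2 _. apply Hq; auto.
Qed.

Lemma has_deriv_within_eq g1 g2 lo hi t d1 d2 : has_deriv_within g1 lo hi t d1 ->
  (forall s, g1 s = g2 s) -> d1 = d2 -> has_deriv_within g2 lo hi t d2.
Proof.
  intros H E <- eps Heps. destruct (H eps Heps) as [e [He Q]]. exists e; split; auto.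
  intros h Hh Hh2 Hh3. rewrite <- (E (t + h)), <- (E t); auto.
Qed.

Lemma has_deriv_within_plus g1 g2 lo hi t d1 d2 :
  has_deriv_within g1 lo hi t d1 -> has_deriv_within g2 lo hi t d2 ->
  has_deriv_within (fun s => g1 s + g2 s) lo hi t (d1 + d2).
Proof.
  intros H1 H2 eps Heps. destruct (H1 (eps/2)) as [e1 [He1 Q1]]; [lra|].
  destruct (H2 (eps/2)) as [e2 [He2 Q2]]; [lra|].
  exists (Rmin e1 e2); split; [apply Rmin_pos; auto|].
  intros h Hh Hh2 Hh3.
  assert (A1 := Q1 h Hh (Rlt_le_trans _ _ _ Hh2 (Rmin_l _ _)) Hh3).
  assert (A2 := Q2 h Hh (Rlt_le_trans _ _ _ Hh2 (Rmin_r _ _)) Hh3).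
  replace ((g1 (t + h) + g2 (t + h) - (g1 t + g2 t)) / h - (d1 + d2)) with
    (((g1 (t + h) - g1 t) / h - d1) + ((g2 (t + h) - g2 t) / h - d2)) by (field; auto).
  eapply Rle_lt_trans; [apply Rabs_triang|]. lra.
Qed.

Lemma has_deriv_within_scal c g lo hi t d : has_deriv_within g lo hi t d ->
  has_deriv_within (fun s => c * g s) lo hi t (c * d).
Proof.
  intros H eps Heps.
  assert (Hpos : 0 < Rabs c + 1) by (pose proof (Rabs_pos c); lra).
  destruct (H (eps / (Rabs c + 1))) as [e [He Q]]; [apply Rdiv_lt_0_compat; lra|].
  exists e; split; auto. intros h Hh Hh2 Hh3. specialize (Q h Hh Hh2 Hh3).
  replace ((c * g (t + h) - c * g t) / h - c * d) with (c * ((g (t + h) - g t) / h - d))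
    by (field; auto).
  rewrite Rabs_mult.
  apply Rle_lt_trans with ((Rabs c + 1) * Rabs ((g (t + h) - g t) / h - d)).
  { apply Rmult_le_compat_r; [apply Rabs_pos|lra]. }
  apply Rlt_le_trans with ((Rabs c + 1) * (eps / (Rabs c + 1))).
  { apply Rmult_lt_compat_l; auto. }
  right; field; lra.
Qed.

Lemma has_deriv_within_minus g1 g2 lo hi t d1 d2 :
  has_deriv_within g1 lo hi t d1 -> has_deriv_within g2 lo hi t d2 ->
  has_deriv_within (fun s => g1 s - g2 s) lo hi t (d1 - d2).
Proof.
  intros H1 H2.
  apply (has_deriv_within_eq _ _ _ _ _ _ _
    (has_deriv_within_plus _ _ _ _ _ _ _ H1 (has_deriv_within_scal (-1) _ _ _ _ _ H2)));
    intros; ring.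
Qed.

Lemma has_deriv_within_mult g1 g2 lo hi t d1 d2 :
  has_deriv_within g1 lo hi t d1 -> has_deriv_within g2 lo hi t d2 ->
  has_deriv_within (fun s => g1 s * g2 s) lo hi t (d1 * g2 t + g1 t * d2).
Proof.
  intros H1 H2 eps Heps.
  set (M := Rabs (g2 t) + 1).
  assert (HM : 0 < M) by (unfold M; pose proof (Rabs_pos (g2 t)); lra).
  assert (Hg1 : 0 < Rabs (g1 t) + 1) by (pose proof (Rabs_pos (g1 t)); lra).
  assert (Hd1 : 0 < Rabs d1 + 1) by (pose proof (Rabs_pos d1); lra).
  destruct (H1 (eps/(3*M))) as [e1 [He1 Q1]]; [apply Rdiv_lt_0_compat; lra|].
  destruct (H2 (eps/(3*(Rabs (g1 t) + 1)))) as [e2 [He2 Q2]]; [apply Rdiv_lt_0_compat; lra|].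
  destruct (has_deriv_within_continuous _ _ _ _ _ H2 (Rmin 1 (eps/(3*(Rabs d1 + 1)))))
    as [e3 [He3 Q3]]; [apply Rmin_pos; [lra|apply Rdiv_lt_0_compat; lra]|].
  exists (Rmin e1 (Rmin e2 e3)); split; [repeat apply Rmin_pos; auto|].
  intros h Hh Hh2 Hh3.
  pose proof (Rmin_l e1 (Rmin e2 e3)). pose proof (Rmin_r e1 (Rmin e2 e3)).
  pose proof (Rmin_l e2 e3). pose proof (Rmin_r e2 e3).
  specialize (Q1 h Hh ltac:(lra) Hh3). specialize (Q2 h Hh ltac:(lra) Hh3).
  assert (Q3' : Rabs (g2 (t + h) - g2 t) < Rmin 1 (eps/(3*(Rabs d1 + 1)))).
  { apply Q3; auto. replace (t + h - t) with h by ring; lra. }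
  set (q1 := (g1 (t + h) - g1 t) / h - d1) in *.
  set (q2 := (g2 (t + h) - g2 t) / h - d2) in *.
  set (w := g2 (t + h) - g2 t) in *.
  replace ((g1 (t + h) * g2 (t + h) - g1 t * g2 t) / h - (d1 * g2 t + g1 t * d2))
    with (q1 * g2 (t + h) + d1 * w + g1 t * q2) by (unfold q1, q2, w; field; auto).
  pose proof (Rmin_l 1 (eps/(3*(Rabs d1 + 1)))). pose proof (Rmin_r 1 (eps/(3*(Rabs d1 + 1)))).
  assert (Hg2 : Rabs (g2 (t + h)) <= M).
  { unfold M. replace (g2 (t + h)) with (w + g2 t) by (unfold w; ring).
    eapply Rle_trans; [apply Rabs_triang|]. lra. }
  assert (T1 : Rabs (q1 * g2 (t + h)) <= eps / 3).
  { rewrite Rabs_mult. apply Rle_trans with (eps / (3 * M) * M).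
    { apply Rmult_le_compat; try apply Rabs_pos; lra. }
    right; field; lra. }
  assert (T2 : Rabs (d1 * w) <= eps / 3).
  { rewrite Rabs_mult. apply Rle_trans with ((Rabs d1 + 1) * (eps / (3 * (Rabs d1 + 1)))).
    { apply Rmult_le_compat; try apply Rabs_pos; lra. }
    right; field; lra. }
  assert (T3 : Rabs (g1 t * q2) < eps / 3).
  { rewrite Rabs_mult. apply Rle_lt_trans with ((Rabs (g1 t) + 1) * Rabs q2).
    { apply Rmult_le_compat_r; [apply Rabs_pos|lra]. }
    apply Rlt_le_trans with ((Rabs (g1 t) + 1) * (eps / (3 * (Rabs (g1 t) + 1)))).
    { apply Rmult_lt_compat_l; auto. }
    right; field; lra. }
  eapply Rle_lt_trans; [apply Rabs_triang|].
  eapply Rle_lt_trans; [apply Rplus_le_compat_r; apply Rabs_triang|]. lra.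
Qed.

Lemma has_deriv_within_exp_affine c b lo hi t :
  has_deriv_within (fun s => exp (c * s + b)) lo hi t (c * exp (c * t + b)).
Proof.
  apply derivable_pt_lim_has_deriv_within.
  assert (Hlin : derivable_pt_lim (fun s => c * s + b) t c).
  { intros eps Heps. exists (mkposreal 1 Rlt_0_1). intros h Hh _.
    replace ((c * (t + h) + b - (c * t + b)) / h - c) with 0 by (field; auto).
    rewrite Rabs_R0; auto. }
  pose proof (derivable_pt_lim_comp _ exp t c _ Hlin (derivable_pt_lim_exp (c * t + b))) as H.
  unfold comp in H. rewrite Rmult_comm. exact H.
Qed.

Lemma exp_affine_continuous M c b w : forall eps, 0 < eps -> exists del, 0 < del /\
  forall u, Rabs (u - w) < del -> Rabs (M * exp (c * u + b) - M * exp (c * w + b)) < eps.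
Proof.
  intros eps Heps.
  assert (HM : 0 < Rabs M + 1) by (pose proof (Rabs_pos M); lra).
  destruct (has_deriv_within_continuous _ _ _ _ _ (has_deriv_within_exp_affine c b (w - 1) (w + 1) w)
    (eps / (Rabs M + 1))) as [del [Hd Q]]; [apply Rdiv_lt_0_compat; lra|].
  exists (Rmin del 1); split; [apply Rmin_pos; lra|]. intros u Hu.
  pose proof (Rmin_l del 1). pose proof (Rmin_r del 1).
  assert (Hu' : w - 1 <= u <= w + 1) by (apply Rabs_def2 in Hu; lra).
  specialize (Q u Hu' ltac:(lra)).
  replace (M * exp (c * u + b) - M * exp (c * w + b))
    with (M * (exp (c * u + b) - exp (c * w + b))) by ring.
  rewrite Rabs_mult.
  apply Rle_lt_trans with ((Rabs M + 1) * Rabs (exp (c * u + b) - exp (c * w + b))).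
  { apply Rmult_le_compat_r; [apply Rabs_pos|lra]. }
  apply Rlt_le_trans with ((Rabs M + 1) * (eps / (Rabs M + 1))).
  { apply Rmult_lt_compat_l; auto. }
  right; field; lra.
Qed.

Lemma exp_le_compat x y : x <= y -> exp x <= exp y.
Proof. intros [H|H]; [left; apply exp_increasing; auto|rewrite H; lra]. Qed.

Lemma exp_linear_eventually_lt B c g eps : 0 < B -> g < 0 -> 0 < eps ->
  exists N : nat, forall j, (N <= j)%nat -> B * exp (c + INR j * g) < eps.
Proof.
  intros HB Hg Heps.
  destruct (INR_archimed 1 ((c - ln (eps / B)) / - g) ltac:(lra)) as [N HN].
  rewrite Rmult_1_r in HN. apply (Rmult_lt_compat_r (- g)) in HN; [|lra].
  unfold Rdiv in HN. rewrite Rmult_assoc, Rinv_l, Rmult_1_r in HN by lra.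
  exists N. intros j Hj. pose proof (le_INR N j Hj) as HNj.
  pose proof (Rmult_le_compat_neg_l g _ _ (Rlt_le _ _ Hg) HNj).
  assert (Hlt : exp (c + INR j * g) < exp (ln (eps / B))) by (apply exp_increasing; lra).
  rewrite exp_ln in Hlt by (apply Rdiv_lt_0_compat; lra).
  apply (Rmult_lt_compat_l B) in Hlt; auto. unfold Rdiv in Hlt.
  rewrite (Rmult_comm eps), <- Rmult_assoc, Rinv_r, Rmult_1_l in Hlt; lra.
Qed.

Lemma nonpos_on_closure (F : R -> R) A B : A < B ->
  (forall w eps, 0 < eps -> exists del, 0 < del /\
     forall u, Rabs (u - w) < del -> Rabs (F u - F w) < eps) ->
  (forall w, A < w < B -> F w <= 0) -> forall w, A <= w <= B -> F w <= 0.
Proof.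
  intros HAB Hc H w Hw. destruct (Rle_dec (F w) 0) as [|Hn]; auto. exfalso.
  destruct (Hc w (F w) ltac:(lra)) as [del [Hd Q]].
  set (e := Rmin (del / 2) ((B - A) / 2)).
  assert (He : 0 < e /\ e <= del / 2 /\ e <= (B - A) / 2)
    by (split; [apply Rmin_pos; lra|split; [apply Rmin_l|apply Rmin_r]]).
  assert (Hex : exists u, A < u < B /\ Rabs (u - w) < del).
  { destruct (Req_dec w A) as [->|HA]; [exists (A + e); rewrite Rabs_right; lra|].
    destruct (Req_dec w B) as [->|HB]; [exists (B - e); rewrite Rabs_left; lra|].
    exists w. rewrite Rminus_diag, Rabs_R0; lra. }
  destruct Hex as [u [Hu1 Hu2]]. specialize (Q u Hu2). specialize (H u Hu1).
  apply Rabs_def2 in Q. lra.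
Qed.

Lemma le_of_deriv_nonpos h dh lo hi : lo <= hi ->
  (forall t, lo <= t <= hi -> has_deriv_within h lo hi t (dh t)) ->
  (forall t, lo < t < hi -> dh t <= 0) -> h hi <= h lo.
Proof.
  intros Hle Hd Hneg. apply Rle_plus_epsilon. intros eps Heps.
  set (e := eps / (hi - lo + 1)).
  assert (He : 0 < e) by (unfold e; apply Rdiv_lt_0_compat; lra).
  assert (Heps' : e * (hi - lo) + e = eps) by (unfold e; field; lra).
  set (P := fun u => h u <= h lo + e * (u - lo) + e).
  enough (HP : P hi) by (unfold P in HP; lra).
  apply (continuous_induction lo hi); auto; [| |lra].
  - intros t Ht Hb. unfold P. destruct (Req_dec t lo) as [->|Hne]; [lra|].
    destruct (Rle_dec (h t) (h lo + e * (t - lo) + e)) as [|Hn]; auto. exfalso.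
    set (gap := h t - (h lo + e * (t - lo) + e)).
    destruct (has_deriv_within_continuous _ _ _ _ _ (Hd t Ht) (gap/2)) as [del [Hdel Hc]];
      [unfold gap; lra|].
    set (u := Rmax lo (t - del/2)).
    assert (Hu1 : lo <= u < t) by (unfold u, Rmax; destruct (Rle_dec lo (t - del/2)); lra).
    assert (Hu2 : Rabs (u - t) < del).
    { rewrite Rabs_left by lra. unfold u, Rmax; destruct (Rle_dec lo (t - del/2)); lra. }
    specialize (Hc u ltac:(lra) Hu2). specialize (Hb u Hu1). unfold P in Hb.
    apply Rabs_def2 in Hc.
    assert (e * (u - lo) <= e * (t - lo)) by (apply Rmult_le_compat_l; lra).
    unfold gap in *. lra.
  - intros t Ht Hb. destruct (Req_dec t lo) as [->|Hne].
    + destruct (has_deriv_within_continuous _ _ _ _ _ (Hd lo ltac:(lra)) e He)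
        as [del [Hdel Hc]].
      exists del; split; auto. intros u Hu1 Hu2. unfold P.
      assert (Hx : Rabs (h u - h lo) < e) by (apply Hc; [lra|rewrite Rabs_right; lra]).
      apply Rabs_def2 in Hx. assert (0 <= e * (u - lo)) by (apply Rmult_le_pos; lra). lra.
    + destruct (Hd t ltac:(lra) e He) as [del [Hdel Hq]].
      exists del; split; auto. intros u Hu1 Hu2.
      specialize (Hq (u - t) ltac:(lra) ltac:(rewrite Rabs_right; lra)).
      replace (t + (u - t)) with u in Hq by ring. specialize (Hq ltac:(lra)).
      specialize (Hneg t ltac:(lra)). specialize (Hb t ltac:(lra)). unfold P in *.
      apply Rabs_def2 in Hq. destruct Hq as [Hq _].
      assert (Hq2 : (h u - h t) / (u - t) < e) by lra.
      apply (Rmult_lt_compat_r (u - t)) in Hq2; [|lra].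
      replace ((h u - h t) / (u - t) * (u - t)) with (h u - h t) in Hq2 by (field; lra).
      lra.
Qed.

Lemma abs_increment_le y Y dy dY lo hi : lo <= hi ->
  (forall t, lo <= t <= hi -> has_deriv_within y lo hi t (dy t)) ->
  (forall t, lo <= t <= hi -> has_deriv_within Y lo hi t (dY t)) ->
  (forall t, lo < t < hi -> Rabs (dy t) <= dY t) -> Rabs (y hi - y lo) <= Y hi - Y lo.
Proof.
  intros Hle Hy HY Hb.
  assert (A1 : (fun s => y s - Y s) hi <= (fun s => y s - Y s) lo).
  { apply (le_of_deriv_nonpos (fun s => y s - Y s) (fun t => dy t - dY t)); auto.
    - intros t Ht. apply has_deriv_within_minus; auto.
    - intros t Ht. pose proof (Hb t Ht). pose proof (Rle_abs (dy t)). pose proof (Rle_abs (- dy t)). rewrite Rabs_Ropp in *. lra. }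
  assert (A2 : (fun s => (-1) * y s - Y s) hi <= (fun s => (-1) * y s - Y s) lo).
  { apply (le_of_deriv_nonpos (fun s => (-1) * y s - Y s) (fun t => (-1) * dy t - dY t)); auto.
    - intros t Ht. apply has_deriv_within_minus; auto. apply has_deriv_within_scal; auto.
    - intros t Ht. pose proof (Hb t Ht). pose proof (Rle_abs (dy t)). pose proof (Rle_abs (- dy t)). rewrite Rabs_Ropp in *. lra. }
  simpl in A1, A2. apply Rabs_le. lra.
Qed.

(** * Integer ranges and the time scale *)

Definition foldZ (op : R -> R -> R) (e : R) (g : Z -> R) (lo : Z) (len : nat) : R :=
  fold_right (fun i acc => op (g (lo + Z.of_nat i)%Z) acc) e (seq 0 len).

Lemma foldZ_succ op e g lo len :
  foldZ op e g lo (S len) = op (g lo) (foldZ op e g (lo + 1) len).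
Proof.
  unfold foldZ. simpl. rewrite Z.add_0_r, <- seq_shift. f_equal.
  induction (seq 0 len) as [|i l IH]; simpl; auto.
  rewrite IH. f_equal. f_equal. lia.
Qed.

Section FoldZ.
Variables (op : R -> R -> R) (e : R).
Hypothesis op_assoc : forall x y z, op (op x y) z = op x (op y z).
Hypothesis op_unit : forall x, op e x = x.

Lemma foldZ_add g lo n1 n2 :
  foldZ op e g lo (n1 + n2) = op (foldZ op e g lo n1) (foldZ op e g (lo + Z.of_nat n1) n2).
Proof.
  revert lo; induction n1 as [|n1 IH]; intros lo.
  - simpl. rewrite Z.add_0_r, op_unit. reflexivity.
  - simpl plus. rewrite !foldZ_succ, IH, op_assoc.
    replace (lo + 1 + Z.of_nat n1)%Z with (lo + Z.of_nat (S n1))%Z by lia. reflexivity.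
Qed.

Lemma foldZ_range_split g lo mid hi : (lo <= mid <= hi + 1)%Z ->
  foldZ op e g lo (Z.to_nat (hi - lo + 1)) =
  op (foldZ op e g lo (Z.to_nat (mid - 1 - lo + 1))) (foldZ op e g mid (Z.to_nat (hi - mid + 1))).
Proof.
  intros H.
  replace (Z.to_nat (hi - lo + 1))
    with (Z.to_nat (mid - 1 - lo + 1) + Z.to_nat (hi - mid + 1))%nat by lia.
  rewrite foldZ_add. do 3 f_equal. lia.
Qed.
End FoldZ.

Lemma sumZ_split lo mid hi g : (lo <= mid <= hi + 1)%Z ->
  sumZ lo hi g = sumZ lo (mid - 1) g + sumZ mid hi g.
Proof. apply (foldZ_range_split Rplus 0); intros; ring. Qed.

Lemma prodZ_split lo mid hi g : (lo <= mid <= hi + 1)%Z ->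
  prodZ lo hi g = prodZ lo (mid - 1) g * prodZ mid hi g.
Proof. apply (foldZ_range_split Rmult 1); intros; ring. Qed.

Lemma sumZ_empty lo hi g : (hi < lo)%Z -> sumZ lo hi g = 0.
Proof. intros H. unfold sumZ. replace (Z.to_nat (hi - lo + 1)) with 0%nat by lia. reflexivity. Qed.

Lemma prodZ_empty lo hi g : (hi < lo)%Z -> prodZ lo hi g = 1.
Proof. intros H. unfold prodZ. replace (Z.to_nat (hi - lo + 1)) with 0%nat by lia. reflexivity. Qed.

Lemma sumZ_single k g : sumZ k k g = g k.
Proof. unfold sumZ. replace (Z.to_nat (k - k + 1)) with 1%nat by lia. simpl. rewrite Z.add_0_r; ring. Qed.

Lemma prodZ_single k g : prodZ k k g = g k.
Proof. unfold prodZ. replace (Z.to_nat (k - k + 1)) with 1%nat by lia. simpl. rewrite Z.add_0_r; ring. Qed.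

Lemma sumZ_snoc lo hi g : (lo <= hi + 1)%Z -> sumZ lo (hi + 1) g = sumZ lo hi g + g (hi + 1)%Z.
Proof.
  intros H. rewrite (sumZ_split lo (hi + 1)) by lia. rewrite sumZ_single. do 3 f_equal. lia.
Qed.

Lemma prodZ_snoc lo hi g : (lo <= hi + 1)%Z -> prodZ lo (hi + 1) g = prodZ lo hi g * g (hi + 1)%Z.
Proof.
  intros H. rewrite (prodZ_split lo (hi + 1)) by lia. rewrite prodZ_single. do 3 f_equal. lia.
Qed.

Lemma prodZ_neq0 lo hi g : (forall k, g k <> 0) -> prodZ lo hi g <> 0.
Proof.
  intros H. unfold prodZ. change (foldZ Rmult 1 g lo (Z.to_nat (hi - lo + 1)) <> 0).
  generalize (Z.to_nat (hi - lo + 1)). intros len. revert lo.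
  induction len as [|len IH]; intros lo; [unfold foldZ; simpl; lra|].
  rewrite foldZ_succ. apply Rmult_integral_contrapositive; split; auto.
Qed.

Lemma Zincr_lt (g : Z -> R) : (forall k, g k < g (k + 1)%Z) ->
  forall i j, (i < j)%Z -> g i < g j.
Proof.
  intros H i j Hij. replace j with (i + Z.of_nat (S (Z.to_nat (j - i - 1))))%Z by lia.
  induction (Z.to_nat (j - i - 1)) as [|len IH].
  - replace (i + Z.of_nat 1)%Z with (i + 1)%Z by lia. auto.
  - eapply Rlt_trans; [exact IH|].
    replace (i + Z.of_nat (S (S len)))%Z with ((i + Z.of_nat (S len)) + 1)%Z by lia. auto.
Qed.

Lemma Zincr_le (g : Z -> R) : (forall k, g k < g (k + 1)%Z) ->
  forall i j, (i <= j)%Z -> g i <= g j.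
Proof.
  intros H i j Hij. destruct (Z.eq_dec i j) as [->|]; [lra|]. left; apply Zincr_lt; auto; lia.
Qed.

Lemma s_k_sub_pred th k : s_k th k - s_k th (k - 1) = eta_k th k.
Proof.
  unfold s_k, eta_k, delta_k.
  destruct (Z_lt_le_dec k 0) as [Hk|Hk].
  - replace (0 <=? k)%Z with false by (symmetry; apply Z.leb_gt; lia).
    replace (0 <=? k - 1)%Z with false by (symmetry; apply Z.leb_gt; lia).
    rewrite (sumZ_split (k - 1) k (-1)), sumZ_single by lia.
    replace (2 * (k - 1) + 1)%Z with (2 * k - 1)%Z by lia. ring.
  - replace (0 <=? k)%Z with true by (symmetry; apply Z.leb_le; lia).
    destruct (Z.eq_dec k 0) as [->|Hne].
    + simpl. rewrite sumZ_empty by lia. rewrite sumZ_single. simpl. ring.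
    + replace (0 <=? k - 1)%Z with true by (symmetry; apply Z.leb_le; lia).
      rewrite (sumZ_split 0 (k - 1) (k - 1)), sumZ_single by lia.
      replace (2 * (k - 1) + 1)%Z with (2 * k - 1)%Z by lia. ring.
Qed.

Section TimeScale.
Variable th : Z -> R.
Hypothesis th_incr : forall k, th k < th (k + 1)%Z.

Lemma eta_k_pos k : 0 < eta_k th k.
Proof.
  unfold eta_k. pose proof (th_incr (2 * k - 1)%Z).
  replace (2 * k - 1 + 1)%Z with (2 * k)%Z in H by lia. lra.
Qed.

Lemma delta_k_pos k : 0 < delta_k th k.
Proof. unfold delta_k. pose proof (th_incr (2 * k)%Z). lra. Qed.

Lemma s_k_succ_gt k : s_k th k < s_k th (k + 1)%Z.
Proof.
  pose proof (s_k_sub_pred th (k + 1)). pose proof (eta_k_pos (k + 1)).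
  replace (k + 1 - 1)%Z with k in H by lia. lra.
Qed.

Lemma s_k_lt i j : (i < j)%Z -> s_k th i < s_k th j.
Proof. apply Zincr_lt, s_k_succ_gt. Qed.

Lemma s_k_le i j : (i <= j)%Z -> s_k th i <= s_k th j.
Proof. apply Zincr_le, s_k_succ_gt. Qed.

Section Periodic.
Variables (omega : R) (p : nat).
Hypothesis p_pos : (1 <= p)%nat.
Hypothesis th_periodic : forall k, th (k + 2 * Z.of_nat p)%Z = th k + omega.

Lemma eta_k_periodic k : eta_k th (k + Z.of_nat p) = eta_k th k.
Proof.
  unfold eta_k. replace (2 * (k + Z.of_nat p))%Z with (2 * k + 2 * Z.of_nat p)%Z by lia.
  replace (2 * k + 2 * Z.of_nat p - 1)%Z with (2 * k - 1 + 2 * Z.of_nat p)%Z by lia.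
  rewrite !th_periodic. ring.
Qed.

Lemma delta_k_periodic k : delta_k th (k + Z.of_nat p) = delta_k th k.
Proof.
  unfold delta_k. replace (2 * (k + Z.of_nat p))%Z with (2 * k + 2 * Z.of_nat p)%Z by lia.
  replace (2 * k + 2 * Z.of_nat p + 1)%Z with (2 * k + 1 + 2 * Z.of_nat p)%Z by lia.
  rewrite !th_periodic. ring.
Qed.

Lemma delta_k_periodic_mul k (q : Z) : delta_k th (k + q * Z.of_nat p) = delta_k th k.
Proof.
  induction q using Z.peano_ind.
  - f_equal; lia.
  - replace (k + Z.succ q * Z.of_nat p)%Z with (k + q * Z.of_nat p + Z.of_nat p)%Z by lia.
    rewrite delta_k_periodic; auto.
  - rewrite <- IHq.
    replace (k + q * Z.of_nat p)%Z with (k + Z.pred q * Z.of_nat p + Z.of_nat p)%Z by lia.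
    rewrite delta_k_periodic; auto.
Qed.

Lemma s_k_add_period k : s_k th (k + Z.of_nat p) - s_k th k = psi_omega th p.
Proof.
  assert (Htel : forall len : nat,
    sumZ 1 (Z.of_nat len) (eta_k th) = s_k th (Z.of_nat len) - s_k th 0).
  { induction len as [|len IH]; [rewrite sumZ_empty by lia; simpl; ring|].
    replace (Z.of_nat (S len)) with (Z.of_nat len + 1)%Z by lia.
    rewrite sumZ_snoc, IH by lia. pose proof (s_k_sub_pred th (Z.of_nat len + 1)).
    replace (Z.of_nat len + 1 - 1)%Z with (Z.of_nat len) in H by lia. lra. }
  unfold psi_omega. rewrite Htel.
  induction k using Z.peano_ind; [reflexivity| |].
  - pose proof (s_k_sub_pred th (Z.succ k + Z.of_nat p)). pose proof (s_k_sub_pred th (Z.succ k)).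
    replace (Z.succ k + Z.of_nat p - 1)%Z with (k + Z.of_nat p)%Z in H by lia.
    replace (Z.succ k - 1)%Z with k in H0 by lia.
    replace (Z.succ k + Z.of_nat p)%Z with (Z.succ k + Z.of_nat p)%Z in H by lia.
    rewrite eta_k_periodic in H. lra.
  - pose proof (s_k_sub_pred th (k + Z.of_nat p)). pose proof (s_k_sub_pred th k).
    replace (k + Z.of_nat p - 1)%Z with (Z.pred k + Z.of_nat p)%Z in H by lia.
    replace (k - 1)%Z with (Z.pred k) in H0 by lia.
    rewrite eta_k_periodic in H. lra.
Qed.

Lemma psi_omega_pos : 0 < psi_omega th p.
Proof. rewrite <- (s_k_add_period 0). pose proof (s_k_lt 0 (0 + Z.of_nat p) ltac:(lia)). lra. Qed.

Lemma delta_k_le_max k : delta_k th k <= delta_max th p.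
Proof.
  set (r := ((k - 1) mod Z.of_nat p + 1)%Z).
  assert (Hr : (1 <= r <= Z.of_nat p)%Z).
  { unfold r. pose proof (Z.mod_pos_bound (k - 1) (Z.of_nat p)). lia. }
  assert (Hk : k = (r + ((k - 1) / Z.of_nat p) * Z.of_nat p)%Z).
  { unfold r. pose proof (Z.div_mod (k - 1) (Z.of_nat p)). lia. }
  rewrite Hk, delta_k_periodic_mul. unfold delta_max.
  assert (Hin : In (Z.to_nat r) (seq 1 p)) by (apply in_seq; lia).
  replace r with (Z.of_nat (Z.to_nat r)) by lia.
  revert Hin. generalize (Z.to_nat r). intros q Hq. clear Hk Hr.
  induction (seq 1 p); simpl in *; [tauto|].
  destruct Hq as [->|Hq]; [apply Rmax_l|]. eapply Rle_trans; [apply IHl; auto|apply Rmax_r].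
Qed.

Lemma delta_max_pos : 0 < delta_max th p.
Proof. pose proof (delta_k_le_max 0). pose proof (delta_k_pos 0). lra. Qed.

Lemma s_k_growth (l : Z) (len : nat) :
  (INR len / INR p - 1) * psi_omega th p <= s_k th (l + Z.of_nat len) - s_k th l.
Proof.
  pose proof psi_omega_pos as Hps.
  set (q := (len / p)%nat). set (rr := (len mod p)%nat).
  assert (Hlen : len = (q * p + rr)%nat)
    by (unfold q, rr; rewrite Nat.mul_comm; apply Nat.div_mod; lia).
  assert (Hrr : (rr < p)%nat) by (unfold rr; apply Nat.mod_upper_bound; lia).
  assert (Hq : forall q0 : nat, s_k th (l + Z.of_nat (q0 * p)) - s_k th l = INR q0 * psi_omega th p).
  { induction q0. { simpl. replace (l + 0)%Z with l by lia. ring. }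
    pose proof (s_k_add_period (l + Z.of_nat (q0 * p))).
    replace (l + Z.of_nat (q0 * p) + Z.of_nat p)%Z with (l + Z.of_nat (S q0 * p))%Z in H by lia.
    rewrite S_INR. lra. }
  assert (H1 : s_k th (l + Z.of_nat (q * p)) <= s_k th (l + Z.of_nat len)) by (apply s_k_le; lia).
  pose proof (Hq q).
  assert (INR len / INR p - 1 <= INR q).
  { assert (0 < INR p) by (apply lt_0_INR; lia).
    apply Rmult_le_reg_r with (INR p); auto.
    replace ((INR len / INR p - 1) * INR p) with (INR len - INR p) by (field; lra).
    rewrite Hlen, plus_INR, mult_INR. apply lt_INR in Hrr. lra. }
  apply Rle_trans with (INR q * psi_omega th p); [|lra].
  apply Rmult_le_compat_r; lra.
Qed.
End Periodic.
End TimeScale.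

(** * Cells of the network *)

Section Cells.
Variables m n : nat.

Lemma in_cells_iff h l : In (h, l) (cells m n) <-> in_cell m n h l.
Proof.
  unfold cells, in_cell. rewrite in_flat_map. split.
  - intros [i [Hi Hin]]. apply in_map_iff in Hin. destruct Hin as [j [Heq Hj]].
    inversion Heq; subst. apply in_seq in Hi. apply in_seq in Hj. lia.
  - intros H. exists h. split; [apply in_seq; lia|].
    apply in_map_iff. exists l. split; auto. apply in_seq; lia.
Qed.

Lemma cellmax_ge g i j : in_cell m n i j -> g i j <= cellmax m n g.
Proof.
  intros H. apply in_cells_iff in H. unfold cellmax.
  induction (cells m n); simpl in *; [tauto|].
  destruct H as [->|H]; [apply Rmax_l|]. eapply Rle_trans; [apply IHl; auto|apply Rmax_r].
Qed.

Lemma cellmax_lt g b : (1 <= m)%nat -> (1 <= n)%nat -> (forall i j, in_cell m n i j -> g i j < b) -> cellmax m n g < b.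
Proof.
  intros Hm Hn H. unfold cellmax.
  assert (HL : forall c, In c (cells m n) -> g (fst c) (snd c) < b)
    by (intros [h l] Hc; apply H, in_cells_iff, Hc).
  induction (cells m n); simpl; [apply H; unfold in_cell; lia|].
  unfold Rmax. destruct (Rle_dec _ _); [apply IHl; intros; apply HL; simpl; auto|].
  apply HL; simpl; auto.
Qed.

Lemma cellmin_le g i j : in_cell m n i j -> cellmin m n g <= g i j.
Proof.
  intros H. apply in_cells_iff in H. unfold cellmin.
  induction (cells m n); simpl in *; [tauto|].
  destruct H as [->|H]; [apply Rmin_l|]. eapply Rle_trans; [apply Rmin_r|apply IHl; auto].
Qed.

Lemma Rabs_le_vnorm v i j : in_cell m n i j -> Rabs (v i j) <= vnorm m n v.
Proof. apply (cellmax_ge (fun i j => Rabs (v i j))). Qed.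

Lemma vnorm_nonneg v : (1 <= m)%nat -> (1 <= n)%nat -> 0 <= vnorm m n v.
Proof. intros Hm Hn. eapply Rle_trans; [apply Rabs_pos|apply (Rabs_le_vnorm v 1 1)]. unfold in_cell; lia. Qed.

Lemma uniform_radius_over_cells (Q : nat -> nat -> R -> Prop) :
  (forall i j d d', Q i j d -> 0 < d' <= d -> Q i j d') ->
  (forall i j, in_cell m n i j -> exists d, 0 < d /\ Q i j d) ->
  exists d, 0 < d /\ forall i j, in_cell m n i j -> Q i j d.
Proof.
  intros Hmon H.
  assert (HL : forall L : list (nat * nat), (forall c, In c L -> in_cell m n (fst c) (snd c)) ->
    exists d, 0 < d /\ forall c, In c L -> Q (fst c) (snd c) d).
  { induction L as [|c L IH]; intros HL; [exists 1; split; [lra|intros c []]|].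
    destruct (IH (fun c' Hc' => HL c' (or_intror Hc'))) as [d1 [Hd1 Q1]].
    destruct (H (fst c) (snd c) (HL c (or_introl eq_refl))) as [d2 [Hd2 Q2]].
    exists (Rmin d1 d2); split; [apply Rmin_pos; auto|].
    pose proof (Rmin_pos d1 d2 Hd1 Hd2).
    intros c' [<-|Hc']; eapply Hmon; [exact Q2| |apply Q1; auto|];
      split; auto; [apply Rmin_r|apply Rmin_l]. }
  destruct (HL (cells m n)) as [d [Hd Q1]]; [intros [h l] Hc; apply in_cells_iff; auto|].
  exists d; split; auto. intros i j Hij. apply (Q1 (i, j)), in_cells_iff, Hij.
Qed.

Variables (r i j : nat).

Lemma nbsum_minus g1 g2 :
  nbsum m n r i j g1 - nbsum m n r i j g2 = nbsum m n r i j (fun h l => g1 h l - g2 h l).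
Proof. unfold nbsum. induction (cells m n); simpl; [ring|]. destruct (_ && _)%bool; lra. Qed.

Lemma nbsum_mulr g c : nbsum m n r i j (fun h l => g h l * c) = nbsum m n r i j g * c.
Proof. unfold nbsum. induction (cells m n); simpl; [ring|]. destruct (_ && _)%bool; rewrite IHl; ring. Qed.

Lemma nbsum_abs_le g1 g2 : (forall h l, in_cell m n h l -> Rabs (g1 h l) <= g2 h l) ->
  Rabs (nbsum m n r i j g1) <= nbsum m n r i j g2.
Proof.
  intros H. unfold nbsum.
  assert (HL : forall c, In c (cells m n) -> Rabs (g1 (fst c) (snd c)) <= g2 (fst c) (snd c))
    by (intros [h l] Hc; apply H, in_cells_iff, Hc).
  induction (cells m n) as [|c L IH]; simpl; [rewrite Rabs_R0; lra|].
  eapply Rle_trans; [apply Rabs_triang|].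
  apply Rplus_le_compat; [|apply IH; intros; apply HL; simpl; auto].
  destruct (_ && _)%bool; [apply HL; simpl; auto|]. rewrite Rabs_R0; lra.
Qed.

Lemma nbsum_nonneg g : (forall h l, in_cell m n h l -> 0 <= g h l) -> 0 <= nbsum m n r i j g.
Proof.
  intros H. unfold nbsum.
  assert (HL : forall c, In c (cells m n) -> 0 <= g (fst c) (snd c))
    by (intros [h l] Hc; apply H, in_cells_iff, Hc).
  induction (cells m n) as [|c L IH]; simpl; [lra|].
  assert (0 <= fold_right (fun c acc =>
    (if (Nat.leb (natdist (fst c) i) r && Nat.leb (natdist (snd c) j) r)%bool
     then g (fst c) (snd c) else 0) + acc) 0 L) by (apply IH; intros; apply HL; simpl; auto).
  destruct (_ && _)%bool; [pose proof (HL c (or_introl eq_refl))|]; lra.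
Qed.
End Cells.

(** * Convergence to the bounded solution *)

Definition jump_prod (th : Z -> R) (a : nat -> nat -> R) (i j : nat) (l k : Z) : R :=
  prodZ l k (fun nu => 1 - delta_k th nu * a i j).

Section TransitionBound.
Variables (th : Z -> R) (p : nat) (a K : nat -> nat -> R) (i j : nat).
Hypothesis th_incr : forall k, th k < th (k + 1)%Z.
Hypothesis ufun_le : forall (l k : Z) (s tau : R),
  s_k th (l - 1)%Z < tau <= s_k th l -> s_k th k < s <= s_k th (k + 1)%Z -> tau <= s ->
  Rabs (ufun th a i j l k s tau) <= K i j * exp (- lam_ij th p a i j * (s - tau)).

(* The assumed bound only covers half-open intervals; since it depends on [s] and [tau]
   only through [s - tau], it extends to the closed ones by continuity. *)
Lemma ufun_le_closed l k tau s : (l <= k + 1)%Z ->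
  s_k th (l - 1)%Z <= tau <= s_k th l -> s_k th k <= s <= s_k th (k + 1)%Z -> tau <= s ->
  Rabs (exp (- a i j * (s - tau)) * jump_prod th a i j l k)
    <= K i j * exp (- lam_ij th p a i j * (s - tau)).
Proof.
  intros Hlk Htau Hs Hts.
  set (lij := lam_ij th p a i j) in *. set (P := jump_prod th a i j l k).
  set (F := fun w => Rabs P - K i j * exp ((a i j - lij) * w + 0)).
  pose proof (s_k_lt th th_incr k (k + 1) ltac:(lia)).
  pose proof (s_k_lt th th_incr (l - 1) l ltac:(lia)).
  pose proof (s_k_lt th th_incr (l - 1) (k + 1) ltac:(lia)).
  set (A := Rmax 0 (s_k th k - s_k th l)). set (B := s_k th (k + 1)%Z - s_k th (l - 1)%Z).
  assert (HA : 0 <= A /\ s_k th k - s_k th l <= A) by (split; [apply Rmax_l|apply Rmax_r]).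
  assert (HAB : A < B) by (unfold A, B, Rmax; destruct (Rle_dec 0 (s_k th k - s_k th l)); lra).
  assert (Hexp : forall w, exp (- a i j * w) * exp ((a i j - lij) * w + 0) = exp (- lij * w))
    by (intros w; rewrite <- exp_plus; f_equal; ring).
  assert (Hopen : forall w, A < w < B -> F w <= 0).
  { intros w Hw. unfold F.
    set (s' := Rmin (s_k th (k + 1)%Z) (s_k th l + w)).
    assert (Hs' : s_k th k < s' <= s_k th (k + 1)%Z)
      by (unfold s', Rmin; destruct (Rle_dec _ _); lra).
    assert (Ht' : s_k th (l - 1)%Z < s' - w <= s_k th l)
      by (unfold s', Rmin; destruct (Rle_dec _ _); unfold B in Hw; lra).
    specialize (ufun_le l k s' (s' - w) Ht' Hs' ltac:(lra)).
    unfold ufun in ufun_le. replace (s' - (s' - w)) with w in ufun_le by ring.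
    rewrite Rabs_mult, Rabs_right in ufun_le by (left; apply exp_pos).
    change (prodZ l k (fun nu => 1 - delta_k th nu * a i j)) with P in ufun_le. rewrite <- (Hexp w) in ufun_le.
    apply Rmult_le_reg_l with (exp (- a i j * w)); [apply exp_pos|]. lra. }
  assert (Hcont : forall w eps, 0 < eps -> exists del, 0 < del /\
      forall u, Rabs (u - w) < del -> Rabs (F u - F w) < eps).
  { intros w eps Heps.
    destruct (exp_affine_continuous (K i j) (a i j - lij) 0 w eps Heps) as [del [Hd Q]].
    exists del; split; auto. intros u Hu. unfold F. rewrite <- Rabs_Ropp.
    replace (- (Rabs P - K i j * exp ((a i j - lij) * u + 0)
                - (Rabs P - K i j * exp ((a i j - lij) * w + 0))))
      with (K i j * exp ((a i j - lij) * u + 0) - K i j * exp ((a i j - lij) * w + 0)) by ring.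
    auto. }
  assert (Hw : A <= s - tau <= B) by (unfold A, B, Rmax; destruct (Rle_dec _ _); lra).
  pose proof (nonpos_on_closure F A B HAB Hcont Hopen (s - tau) Hw) as HF. unfold F in HF.
  rewrite Rabs_mult, Rabs_right by (left; apply exp_pos). fold P.
  rewrite <- (Hexp (s - tau)).
  replace (K i j * (exp (- a i j * (s - tau)) * exp ((a i j - lij) * (s - tau) + 0)))
    with (exp (- a i j * (s - tau)) * (K i j * exp ((a i j - lij) * (s - tau) + 0))) by ring.
  apply Rmult_le_compat_l; [left; apply exp_pos|]. lra.
Qed.
End TransitionBound.

Section Convergence.
Variables (m n r : nat) (a : nat -> nat -> R) (C : nat -> nat -> nat -> nat -> R)
  (f : R -> R) (th : Z -> R) (omega : R) (p : nat) (zeta : Z -> vec)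
  (K : nat -> nat -> R) (Mf Lf MF : R) (phi x : R -> vec) (t0 : R) (l0 : Z).
Hypothesis m_pos : (1 <= m)%nat.
Hypothesis n_pos : (1 <= n)%nat.
Hypothesis C_nonneg : forall i j h l, in_cell m n i j -> in_cell m n h l -> 0 <= C i j h l.
Hypothesis th_incr : forall k, th k < th (k + 1)%Z.
Hypothesis p_pos : (1 <= p)%nat.
Hypothesis th_periodic : forall k, th (k + 2 * Z.of_nat p)%Z = th k + omega.
Hypothesis delta_a_neq1 : forall i j k, in_cell m n i j -> delta_k th k * a i j <> 1.
Hypothesis K_pos : forall i j, in_cell m n i j -> 0 < K i j.
Hypothesis ufun_le : forall i j (l k : Z) (s tau : R), in_cell m n i j ->
  s_k th (l - 1)%Z < tau <= s_k th l -> s_k th k < s <= s_k th (k + 1)%Z -> tau <= s ->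
  Rabs (ufun th a i j l k s tau) <= K i j * exp (- lam_ij th p a i j * (s - tau)).
Hypothesis Mf_pos : 0 < Mf.
Hypothesis f_bounded : forall s, Rabs (f s) <= Mf.
Hypothesis Lf_pos : 0 < Lf.
Hypothesis f_lipschitz : forall s1 s2, Rabs (f s1 - f s2) <= Lf * Rabs (s1 - s2).
Hypothesis C6 : - lam m n th p a + dbar m n r th p a K C Mf Lf MF
  + INR p / psi_omega th p * ln (1 + delta_max th p * dbar m n r th p a K C Mf Lf MF) < 0.
Hypothesis phi_sol : sol_T0 m n r a C f th zeta phi.
Hypothesis phi_bounded : forall t, inT0 th t -> vnorm m n (phi t) <= H0 m n r th p a K C Mf MF.
Hypothesis x_sol : sol_from m n r a C f th zeta t0 x.
Hypothesis t0_piece : th (2 * l0 - 1)%Z <= t0 <= th (2 * l0)%Z.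

Let phi_bound := H0 m n r th p a K C Mf MF.
Let coupling_gain := dbar m n r th p a K C Mf Lf MF.
Let decay_rate := lam m n th p a.
Let jump_growth := 1 + delta_max th p * coupling_gain.

Definition piece (j : nat) : Z := (l0 + Z.of_nat j)%Z.
Definition hi (j : nat) : R := th (2 * piece j)%Z.
(* Piece [0] is cut down to its right end point: [x] need not be defined before [t0]. *)
Definition lo (j : nat) : R := match j with O => hi O | S _ => th (2 * piece j - 1)%Z end.
Definition psi_loc (j : nat) (t : R) : R := t - hi j + s_k th (piece j).
Definition s0 : R := s_k th l0.

Definition err (t : R) (i j : nat) : R := x t i j - phi t i j.
Definition coupling (t : R) (i j : nat) : R :=
  nbsum m n r i j (fun h l => C i j h l * f (phi t h l)) * phi t i j
  - nbsum m n r i j (fun h l => C i j h l * f (x t h l)) * x t i j.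
Definition coupling_rate (i j : nat) : R := (Mf + phi_bound * Lf) * Csum m n r C i j.

Lemma jump_prod_neq0 i q l k : in_cell m n i q -> jump_prod th a i q l k <> 0.
Proof. intros H. apply prodZ_neq0. intros nu. specialize (delta_a_neq1 i q nu H). lra. Qed.

Lemma phi_bound_nonneg : 0 <= phi_bound.
Proof.
  eapply Rle_trans; [apply (vnorm_nonneg m n (phi t0) m_pos n_pos)|].
  apply phi_bounded. exists l0; auto.
Qed.

Lemma coupling_rate_nonneg i j : in_cell m n i j -> 0 <= coupling_rate i j.
Proof.
  intros H. pose proof phi_bound_nonneg. unfold coupling_rate.
  apply Rmult_le_pos; [pose proof (Rmult_le_pos _ _ H0 (Rlt_le _ _ Lf_pos)); lra|].
  apply nbsum_nonneg; auto.
Qed.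

Lemma coupling_rate_K_le i j : in_cell m n i j -> coupling_rate i j * K i j <= coupling_gain.
Proof.
  intros H. pose proof phi_bound_nonneg. unfold coupling_rate, coupling_gain, dbar. fold phi_bound.
  rewrite Rmult_assoc, (Rmult_comm (Csum _ _ _ _ _ _)).
  apply Rmult_le_compat_l; [pose proof (Rmult_le_pos _ _ H0 (Rlt_le _ _ Lf_pos)); lra|].
  apply (cellmax_ge m n (fun i j => K i j * Csum m n r C i j)); auto.
Qed.

Lemma coupling_gain_nonneg : 0 <= coupling_gain.
Proof.
  assert (H11 : in_cell m n 1 1) by (unfold in_cell; lia).
  pose proof (coupling_rate_K_le 1 1 H11). pose proof (coupling_rate_nonneg 1 1 H11).
  pose proof (Rmult_le_pos _ _ H0 (Rlt_le _ _ (K_pos 1 1 H11))). lra.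
Qed.

Lemma jump_growth_ge1 : 1 <= jump_growth.
Proof.
  pose proof coupling_gain_nonneg. pose proof (delta_max_pos th th_incr omega p p_pos th_periodic).
  pose proof (Rmult_le_pos _ _ (Rlt_le _ _ H0) H). unfold jump_growth. lra.
Qed.

Lemma coupling_le t i j M : inT0 th t -> in_cell m n i j ->
  (forall h l, in_cell m n h l -> Rabs (err t h l) <= M) ->
  Rabs (coupling t i j) <= coupling_rate i j * M.
Proof.
  intros Ht Hc HM. unfold coupling, coupling_rate, Csum.
  rewrite <- (nbsum_mulr m n r i j _ (phi t i j)), <- (nbsum_mulr m n r i j _ (x t i j)).
  rewrite nbsum_minus.
  replace ((Mf + phi_bound * Lf) * nbsum m n r i j (fun h l => C i j h l) * M)
    with (nbsum m n r i j (fun h l => C i j h l * ((Mf + phi_bound * Lf) * M)))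
    by (rewrite nbsum_mulr;
        change (nbsum m n r i j (C i j)) with (nbsum m n r i j (fun h l => C i j h l)); ring).
  apply nbsum_abs_le. intros h l Hhl.
  pose proof (HM i j Hc). pose proof (HM h l Hhl). pose proof (f_lipschitz (x t h l) (phi t h l)).
  pose proof (f_bounded (x t h l)). pose proof (C_nonneg i j h l Hc Hhl).
  assert (Hphi : Rabs (phi t i j) <= phi_bound).
  { eapply Rle_trans; [apply (Rabs_le_vnorm m n); auto|apply phi_bounded; auto]. }
  unfold err in *.
  replace (C i j h l * f (phi t h l) * phi t i j - C i j h l * f (x t h l) * x t i j)
    with (- (C i j h l * (f (x t h l) * (x t i j - phi t i j)
                           + (f (x t h l) - f (phi t h l)) * phi t i j))) by ring.
  rewrite Rabs_Ropp, Rabs_mult, Rabs_right by lra.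
  replace (C i j h l * ((Mf + phi_bound * Lf) * M))
    with (C i j h l * (Mf * M + Lf * M * phi_bound)) by ring.
  apply Rmult_le_compat_l; auto.
  eapply Rle_trans; [apply Rabs_triang|]. rewrite !Rabs_mult.
  assert (0 <= M) by (pose proof (Rabs_pos (x t i j - phi t i j)); lra).
  apply Rplus_le_compat; apply Rmult_le_compat; try apply Rabs_pos; auto.
  eapply Rle_trans; [exact H1|]. apply Rmult_le_compat_l; lra.
Qed.

Lemma piece_succ j : piece (S j) = (piece j + 1)%Z.
Proof. unfold piece. lia. Qed.

Lemma lo_succ j : lo (S j) = th (2 * piece j + 1)%Z.
Proof. unfold lo. rewrite piece_succ. f_equal. lia. Qed.

Lemma hi_lt_lo_succ j : hi j < lo (S j).
Proof. rewrite lo_succ. apply th_incr. Qed.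

Lemma lo_le_hi j : lo j <= hi j.
Proof.
  destruct j as [|j]; [simpl; lra|]. rewrite lo_succ. unfold hi. rewrite piece_succ.
  pose proof (th_incr (2 * piece j + 1)). replace (2 * (piece j + 1))%Z with (2 * piece j + 1 + 1)%Z by lia.
  lra.
Qed.

Lemma hi_lt_lo j1 j2 : (j1 < j2)%nat -> hi j1 < lo j2.
Proof.
  intros H. destruct j2 as [|j2]; [lia|]. rewrite lo_succ. unfold hi.
  apply (Zincr_lt th th_incr). unfold piece. lia.
Qed.

Lemma hi_le_hi j1 j2 : (j1 <= j2)%nat -> hi j1 <= hi j2.
Proof. intros H. unfold hi. apply (Zincr_le th th_incr). unfold piece. lia. Qed.

Lemma t0_le_hi j : t0 <= hi j.
Proof.
  eapply Rle_trans; [|apply (hi_le_hi 0); lia]. unfold hi, piece. rewrite Z.add_0_r. lra.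
Qed.

Lemma piece_in_T0 j t : lo j <= t <= hi j -> inT0 th t.
Proof.
  intros Ht. exists (piece j). split; [|apply Ht].
  destruct j as [|j].
  2:{ rewrite lo_succ in Ht. replace (2 * piece (S j) - 1)%Z with (2 * piece j + 1)%Z
        by (unfold piece; lia). lra. }
  simpl in Ht. unfold hi in Ht. pose proof (th_incr (2 * piece 0 - 1)).
  replace (2 * piece 0 - 1 + 1)%Z with (2 * piece 0)%Z in H by lia. lra.
Qed.

Lemma psi_loc_hi j : psi_loc j (hi j) = s_k th (piece j).
Proof. unfold psi_loc. ring. Qed.

Lemma psi_loc_lo_succ j : psi_loc (S j) (lo (S j)) = s_k th (piece j).
Proof.
  rewrite lo_succ. unfold psi_loc, hi. rewrite piece_succ.
  pose proof (s_k_sub_pred th (piece j + 1)). unfold eta_k in H.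
  replace (piece j + 1 - 1)%Z with (piece j) in H by lia.
  replace (2 * (piece j + 1) - 1)%Z with (2 * piece j + 1)%Z in H by lia. lra.
Qed.

Lemma psi_loc_range j t : lo j <= t <= hi j ->
  s_k th (piece j - 1)%Z <= psi_loc j t <= s_k th (piece j).
Proof.
  intros Ht. pose proof (psi_loc_hi j). unfold psi_loc in *. split; [|lra].
  destruct j as [|j].
  - simpl in Ht. pose proof (s_k_le th th_incr (piece 0 - 1) (piece 0) ltac:(lia)). lra.
  - pose proof (psi_loc_lo_succ j). unfold psi_loc in *.
    replace (piece (S j) - 1)%Z with (piece j) by (unfold piece; lia). lra.
Qed.

Lemma err_deriv j t i q : lo (S j) <= t <= hi (S j) -> in_cell m n i q ->
  has_deriv_within (fun s => err s i q) (lo (S j)) (hi (S j)) t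
    (- a i q * err t i q + coupling t i q).
Proof.
  intros Ht Hc.
  destruct (x_sol (piece (S j)) (t0_le_hi (S j))) as [Hx _].
  destruct (phi_sol (piece (S j))) as [Hphi _].
  rewrite Rmax_right in Hx by (pose proof (t0_le_hi 0); pose proof (hi_lt_lo_succ 0);
    pose proof (hi_lt_lo 0 (S j) ltac:(lia)); simpl in *; lra).
  apply (has_deriv_within_eq _ _ _ _ _ _ _
    (has_deriv_within_minus _ _ _ _ _ _ _ (Hx t Ht i q Hc) (Hphi t Ht i q Hc))).
  - reflexivity.
  - unfold net_rhs, coupling, err. ring.
Qed.

Lemma err_jump j i q : in_cell m n i q ->
  err (lo (S j)) i q
  = (1 - delta_k th (piece j) * a i q) * err (hi j) i q + delta_k th (piece j) * coupling (hi j) i q.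
Proof.
  intros Hc.
  destruct (x_sol (piece j) (t0_le_hi j)) as [_ Jx]. destruct (phi_sol (piece j)) as [_ Jphi].
  unfold err, coupling. rewrite lo_succ. unfold hi. rewrite (Jx i q Hc), (Jphi i q Hc). ring.
Qed.

(* Variation of constants: the weight cancels the linear part of the error equation, both
   along the pieces and at the jumps. *)
Definition weighted_err (j : nat) (t : R) (i q : nat) : R :=
  err t i q * exp (a i q * (psi_loc j t - s0)) / jump_prod th a i q l0 (piece j - 1).

Definition comparison (c : R) (j : nat) (t : R) : R :=
  c * exp (coupling_gain * (psi_loc j t - s0)) * jump_growth ^ j.

Lemma weighted_err_deriv j t i q : lo (S j) <= t <= hi (S j) -> in_cell m n i q ->
  has_deriv_within (fun s => weighted_err (S j) s i q) (lo (S j)) (hi (S j)) t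
    (coupling t i q * exp (a i q * (psi_loc (S j) t - s0)) / jump_prod th a i q l0 (piece (S j) - 1)).
Proof.
  intros Ht Hc. set (P := jump_prod th a i q l0 (piece (S j) - 1)).
  assert (HP : P <> 0) by (apply jump_prod_neq0; auto).
  set (b := a i q * (- hi (S j) + s_k th (piece (S j)) - s0)).
  assert (Ee : forall s, exp (a i q * s + b) = exp (a i q * (psi_loc (S j) s - s0)))
    by (intros s; f_equal; unfold b, psi_loc; ring).
  apply (has_deriv_within_eq _ _ _ _ _ _ _ (has_deriv_within_mult _ _ _ _ _ _ _
    (err_deriv j t i q Ht Hc) (has_deriv_within_scal (/ P) _ _ _ _ _
      (has_deriv_within_exp_affine (a i q) b (lo (S j)) (hi (S j)) t)))).
  - intros s. unfold weighted_err. fold P. rewrite Ee. unfold Rdiv. ring.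
  - rewrite !Ee. unfold Rdiv. ring.
Qed.

Lemma comparison_deriv c j lo' hi' t :
  has_deriv_within (comparison c j) lo' hi' t (coupling_gain * comparison c j t).
Proof.
  set (b := coupling_gain * (- hi j + s_k th (piece j) - s0)).
  assert (Ee : forall s, exp (coupling_gain * s + b) = exp (coupling_gain * (psi_loc j s - s0)))
    by (intros s; f_equal; unfold b, psi_loc; ring).
  apply (has_deriv_within_eq _ _ _ _ _ _ _ (has_deriv_within_scal (c * jump_growth ^ j) _ _ _ _ _
    (has_deriv_within_exp_affine coupling_gain b lo' hi' t))).
  - intros s. unfold comparison. rewrite Ee. ring.
  - unfold comparison. rewrite Ee. ring.
Qed.

Definition B0 : R := (cellmax m n K + 1) * vnorm m n (vsub (x (hi 0)) (phi (hi 0))) + 1.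
Definition envelope (j : nat) (t : R) : R :=
  B0 * exp ((coupling_gain - decay_rate) * (psi_loc j t - s0)) * jump_growth ^ j.

Lemma cellmax_K_pos : 0 < cellmax m n K.
Proof.
  assert (H11 : in_cell m n 1 1) by (unfold in_cell; lia).
  pose proof (cellmax_ge m n K 1 1 H11). pose proof (K_pos 1 1 H11). lra.
Qed.

Lemma err_start_lt i q : in_cell m n i q ->
  Rabs (err (hi 0) i q) * (cellmax m n K + 1) < B0.
Proof.
  intros Hc. pose proof (Rabs_le_vnorm m n (vsub (x (hi 0)) (phi (hi 0))) i q Hc).
  pose proof cellmax_K_pos. unfold B0, vsub in *. fold (err (hi 0) i q) in H.
  apply Rmult_le_compat_r with (r := cellmax m n K + 1) in H; lra.
Qed.

Lemma B0_pos : 0 < B0.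
Proof.
  assert (H11 : in_cell m n 1 1) by (unfold in_cell; lia).
  pose proof (err_start_lt 1 1 H11).
  pose proof (Rmult_le_pos _ _ (Rabs_pos (err (hi 0) 1 1)) (Rlt_le _ _ (Rplus_lt_le_0_compat _ _ cellmax_K_pos Rle_0_1))).
  lra.
Qed.

Lemma envelope_pos j t : 0 < envelope j t.
Proof.
  pose proof B0_pos. pose proof jump_growth_ge1. unfold envelope.
  apply Rmult_lt_0_compat; [apply Rmult_lt_0_compat; auto; apply exp_pos|apply pow_lt; lra].
Qed.

Lemma envelope_continuous j t : forall eps, 0 < eps -> exists del, 0 < del /\
  forall u, Rabs (u - t) < del -> Rabs (envelope j u - envelope j t) < eps.
Proof.
  set (c := coupling_gain - decay_rate). set (b := c * (- hi j + s_k th (piece j) - s0)).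
  assert (E : forall u, envelope j u = (B0 * jump_growth ^ j) * exp (c * u + b)).
  { intros u. unfold envelope. replace (c * u + b) with (c * (psi_loc j u - s0))
      by (unfold b, psi_loc; ring). fold c. ring. }
  intros eps Heps. destruct (exp_affine_continuous (B0 * jump_growth ^ j) c b t eps Heps)
    as [del [Hd Q]].
  exists del; split; auto. intros u Hu. rewrite !E. auto.
Qed.

Lemma exp_lam_ij_le i q w : in_cell m n i q -> 0 <= w ->
  exp (- lam_ij th p a i q * w) <= exp (- decay_rate * w).
Proof.
  intros H Hw. apply exp_le_compat.
  pose proof (cellmin_le m n (lam_ij th p a) i q H).
  pose proof (Rmult_le_compat_r _ _ _ Hw H0). unfold decay_rate, lam. lra.
Qed.

Lemma weighted_err_start i q : weighted_err 0 (hi 0) i q = err (hi 0) i q.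
Proof.
  unfold weighted_err, jump_prod. rewrite psi_loc_hi, prodZ_empty by (unfold piece; lia).
  unfold s0, piece. rewrite Z.add_0_r, Rminus_diag, Rmult_0_r, exp_0. field.
Qed.

Lemma comparison_start c : comparison c 0 (hi 0) = c.
Proof.
  unfold comparison. rewrite psi_loc_hi. unfold s0, piece. rewrite Z.add_0_r, Rminus_diag.
  simpl. rewrite Rmult_0_r, exp_0. ring.
Qed.

Lemma envelope_start : envelope 0 (hi 0) = B0.
Proof.
  unfold envelope. rewrite psi_loc_hi. unfold s0, piece. rewrite Z.add_0_r, Rminus_diag.
  simpl. rewrite Rmult_0_r, exp_0. ring.
Qed.

Lemma comparison_jump c j :
  comparison c (S j) (lo (S j)) - comparison c j (hi j)
  = delta_max th p * coupling_gain * comparison c j (hi j).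
Proof. unfold comparison. rewrite psi_loc_lo_succ, psi_loc_hi. simpl pow. unfold jump_growth. ring. Qed.

Section Step.
Variables (js : nat) (ts : R) (i q : nat).
Hypothesis js_pos : (1 <= js)%nat.
Hypothesis ts_piece : lo js <= ts <= hi js.
Hypothesis iq_cell : in_cell m n i q.
Hypothesis err_le_before : forall j t, (j <= js)%nat -> lo j <= t <= hi j -> t < ts ->
  forall h l, in_cell m n h l -> Rabs (err t h l) <= envelope j t.

Let ss := psi_loc js ts.
(* [transport] is the paper's [u_iq(ss, s0)]. *)
Let transport := exp (- a i q * (ss - s0)) * jump_prod th a i q l0 (piece js - 1).
Let Cst := B0 / Rabs transport * exp (- decay_rate * (ss - s0)).

Lemma transport_pos : 0 < Rabs transport.
Proof.
  apply Rabs_pos_lt, Rmult_integral_contrapositive. split; [apply Rgt_not_eq, exp_pos|].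
  apply jump_prod_neq0; auto.
Qed.

Lemma transport_le l tv : (l0 <= l <= piece js)%Z ->
  s_k th (l - 1)%Z <= tv <= s_k th l -> tv <= ss ->
  exp (a i q * (tv - s0)) * Rabs transport
  <= K i q * exp (- lam_ij th p a i q * (ss - tv)) * Rabs (jump_prod th a i q l0 (l - 1)).
Proof.
  intros Hl Htv Hts.
  pose proof (psi_loc_range js ts ts_piece) as Hss. fold ss in Hss.
  assert (Hbound := ufun_le_closed th p a K i q th_incr
    (fun l k s tau => ufun_le i q l k s tau iq_cell) l (piece js - 1) tv ss ltac:(lia) Htv
    ltac:(replace (piece js - 1 + 1)%Z with (piece js) by lia; lra) Hts).
  assert (Hexp : exp (a i q * (tv - s0)) * exp (- a i q * (ss - s0)) = exp (- a i q * (ss - tv)))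
    by (rewrite <- exp_plus; f_equal; ring).
  unfold transport, jump_prod. rewrite (prodZ_split l0 l (piece js - 1)) by lia.
  fold (jump_prod th a i q l0 (l - 1)) (jump_prod th a i q l (piece js - 1)).
  rewrite Rabs_mult in Hbound. rewrite !Rabs_mult.
  rewrite Rabs_right in Hbound by (left; apply exp_pos).
  rewrite (Rabs_right (exp _)) by (left; apply exp_pos).
  replace (exp (a i q * (tv - s0)) * (exp (- a i q * (ss - s0))
      * (Rabs (jump_prod th a i q l0 (l - 1)) * Rabs (jump_prod th a i q l (piece js - 1)))))
    with (exp (- a i q * (ss - tv)) * Rabs (jump_prod th a i q l (piece js - 1))
          * Rabs (jump_prod th a i q l0 (l - 1))) by (rewrite <- Hexp; ring).
  apply Rmult_le_compat_r; [apply Rabs_pos|auto].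
Qed.

Lemma comparison_Cst j t :
  comparison Cst j t = envelope j t * exp (- decay_rate * (ss - psi_loc j t)) / Rabs transport.
Proof.
  pose proof transport_pos. unfold comparison, envelope, Cst.
  replace (exp (- decay_rate * (ss - s0))) with
    (exp ((coupling_gain - decay_rate) * (psi_loc j t - s0)) * exp (- decay_rate * (ss - psi_loc j t))
     * / exp (coupling_gain * (psi_loc j t - s0)))
    by (rewrite <- !exp_plus, <- exp_Ropp, <- exp_plus; f_equal; ring).
  field. split; [lra|apply Rgt_not_eq, exp_pos].
Qed.

Lemma psi_loc_le_ss j t : (j <= js)%nat -> lo j <= t <= hi j -> t < ts -> psi_loc j t <= ss.
Proof.
  intros Hj Ht Hts. destruct (Nat.eq_dec j js) as [->|Hne]; [unfold ss, psi_loc; lra|].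
  pose proof (psi_loc_range j t Ht). pose proof (psi_loc_range js ts ts_piece). fold ss in H0.
  pose proof (s_k_le th th_incr (piece j) (piece js - 1) ltac:(unfold piece; lia)). lra.
Qed.

(* Carried forward to [ts] by the linear part, the coupling at [t] is dominated by the growth of
   the comparison function; this is where [dbar] enters. *)
Lemma weighted_coupling_le j t l : (j <= js)%nat -> lo j <= t <= hi j -> t < ts ->
  (l0 <= l <= piece js)%Z -> s_k th (l - 1)%Z <= psi_loc j t <= s_k th l ->
  Rabs (coupling t i q) * exp (a i q * (psi_loc j t - s0)) / Rabs (jump_prod th a i q l0 (l - 1))
  <= coupling_gain * comparison Cst j t.
Proof.
  intros Hj Ht Hts Hl Hpsi.
  set (tv := psi_loc j t) in *. set (P := Rabs (jump_prod th a i q l0 (l - 1))).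
  set (elam := exp (- lam_ij th p a i q * (ss - tv))).
  assert (Htv : tv <= ss) by (apply psi_loc_le_ss; auto).
  assert (HP : 0 < P) by (apply Rabs_pos_lt, jump_prod_neq0; auto).
  pose proof transport_pos as HT.
  assert (Hcpl := coupling_le t i q (envelope j t) (piece_in_T0 j t Ht) iq_cell
    (err_le_before j t Hj Ht Hts)).
  assert (Htr := transport_le l tv Hl Hpsi Htv). fold elam P in Htr.
  assert (HE : exp (a i q * (tv - s0)) <= K i q * elam * P / Rabs transport).
  { apply (Rmult_le_reg_r (Rabs transport)); auto. unfold Rdiv.
    rewrite Rmult_assoc, Rinv_l, Rmult_1_r; lra. }
  pose proof (coupling_rate_nonneg i q iq_cell) as Hrate.
  pose proof (coupling_rate_K_le i q iq_cell) as HrateK.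
  pose proof (envelope_pos j t) as Henv. pose proof (K_pos i q iq_cell) as HK.
  pose proof (exp_lam_ij_le i q (ss - tv) iq_cell ltac:(lra)) as Hlam. fold elam in Hlam.
  assert (Helam : 0 < elam) by apply exp_pos.
  apply Rle_trans with (coupling_rate i q * envelope j t * (K i q * elam * P / Rabs transport) / P).
  { unfold Rdiv. apply Rmult_le_compat_r; [left; apply Rinv_0_lt_compat; auto|].
    apply Rmult_le_compat; auto; [apply Rabs_pos|left; apply exp_pos]. }
  rewrite comparison_Cst. fold tv.
  replace (coupling_rate i q * envelope j t * (K i q * elam * P / Rabs transport) / P)
    with ((coupling_rate i q * K i q) * (envelope j t * elam / Rabs transport)) by (field; lra).
  assert (Hq : 0 <= envelope j t * elam / Rabs transport)
    by (apply Rmult_le_pos; [apply Rmult_le_pos; lra|left; apply Rinv_0_lt_compat; auto]).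
  apply Rle_trans with (coupling_gain * (envelope j t * elam / Rabs transport)).
  { apply Rmult_le_compat_r; auto. }
  apply Rmult_le_compat_l; [apply coupling_gain_nonneg|]. unfold Rdiv.
  apply Rmult_le_compat_r; [left; apply Rinv_0_lt_compat; auto|].
  apply Rmult_le_compat_l; lra.
Qed.

Lemma weighted_err_jump_le j : (j < js)%nat ->
  Rabs (weighted_err (S j) (lo (S j)) i q - weighted_err j (hi j) i q)
  <= comparison Cst (S j) (lo (S j)) - comparison Cst j (hi j).
Proof.
  intros Hj. set (nu := piece j). set (E := exp (a i q * (s_k th nu - s0))).
  assert (Hnu : (piece (S j) - 1)%Z = nu) by (unfold nu, piece; lia).
  assert (HP : jump_prod th a i q l0 nu
               = jump_prod th a i q l0 (piece j - 1) * (1 - delta_k th nu * a i q)).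
  { unfold jump_prod. replace nu with (piece j - 1 + 1)%Z at 1 by (unfold nu; lia).
    rewrite prodZ_snoc by (unfold piece; lia). cbv beta.
    replace (piece j - 1 + 1)%Z with nu by (unfold nu; lia). reflexivity. }
  assert (Hnz1 : jump_prod th a i q l0 (piece j - 1) <> 0) by (apply jump_prod_neq0; auto).
  assert (Hnz2 : 1 - delta_k th nu * a i q <> 0)
    by (pose proof (delta_a_neq1 i q nu iq_cell); lra).
  assert (Hdiff : weighted_err (S j) (lo (S j)) i q - weighted_err j (hi j) i q =
                  delta_k th nu * (coupling (hi j) i q * E / jump_prod th a i q l0 nu)).
  { unfold weighted_err. rewrite psi_loc_lo_succ, psi_loc_hi, Hnu, err_jump by auto.
    rewrite HP. fold nu E. field. auto. }
  rewrite Hdiff, comparison_jump, Rabs_mult, Rabs_right by (left; apply delta_k_pos; auto).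
  unfold Rdiv. rewrite !Rabs_mult, Rabs_inv, (Rabs_right E) by (left; apply exp_pos).
  assert (Hw := weighted_coupling_le j (hi j) (nu + 1) ltac:(lia)
    ltac:(pose proof (lo_le_hi j); lra)
    ltac:(pose proof (hi_lt_lo j js Hj); lra) ltac:(unfold nu, piece; lia)
    ltac:(rewrite psi_loc_hi; replace (nu + 1 - 1)%Z with nu by lia;
          pose proof (s_k_succ_gt th th_incr nu); fold nu; lra)).
  rewrite psi_loc_hi in Hw. replace (nu + 1 - 1)%Z with nu in Hw by lia. fold nu E in Hw.
  pose proof (delta_k_pos th th_incr nu). pose proof (delta_k_le_max th omega p p_pos th_periodic nu).
  assert (0 <= Rabs (coupling (hi j) i q) * E * / Rabs (jump_prod th a i q l0 nu)).
  { apply Rmult_le_pos; [apply Rmult_le_pos; [apply Rabs_pos|left; apply exp_pos]|].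
    left; apply Rinv_0_lt_compat, Rabs_pos_lt, jump_prod_neq0; auto. }
  rewrite (Rmult_assoc (delta_max th p)). unfold Rdiv in Hw. apply Rmult_le_compat; lra.
Qed.

Lemma weighted_err_piece_le j t : (S j <= js)%nat -> lo (S j) <= t <= hi (S j) -> t <= ts ->
  Rabs (weighted_err (S j) t i q - weighted_err (S j) (lo (S j)) i q)
  <= comparison Cst (S j) t - comparison Cst (S j) (lo (S j)).
Proof.
  intros Hj Ht Hts.
  apply (abs_increment_le (fun s => weighted_err (S j) s i q) (comparison Cst (S j))
    (fun s => coupling s i q * exp (a i q * (psi_loc (S j) s - s0))
              / jump_prod th a i q l0 (piece (S j) - 1))
    (fun s => coupling_gain * comparison Cst (S j) s)); [lra| | |].
  - intros s Hs. eapply has_deriv_within_subinterval; [apply weighted_err_deriv| |]; auto; lra.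
  - intros s Hs. apply comparison_deriv.
  - intros s Hs. unfold Rdiv. rewrite !Rabs_mult, Rabs_inv, (Rabs_right (exp _))
      by (left; apply exp_pos).
    apply (weighted_coupling_le (S j) s (piece (S j))); [auto|lra|lra|unfold piece; lia|].
    apply psi_loc_range; lra.
Qed.

Lemma weighted_err_increment_le j t : (j <= js)%nat -> lo j <= t <= hi j -> t <= ts ->
  Rabs (weighted_err j t i q - err (hi 0) i q) <= comparison Cst j t - Cst.
Proof.
  revert t. induction j as [|j IH]; intros t Hj Ht Hts.
  - simpl in Ht. replace t with (hi 0) by lra.
    rewrite weighted_err_start, comparison_start, !Rminus_diag, Rabs_R0. lra.
  - pose proof (lo_le_hi j). pose proof (hi_lt_lo_succ j).
    pose proof (IH (hi j) ltac:(lia) ltac:(lra) ltac:(lra)).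
    pose proof (weighted_err_jump_le j ltac:(lia)).
    pose proof (weighted_err_piece_le j t Hj Ht Hts).
    replace (weighted_err (S j) t i q - err (hi 0) i q) with
      ((weighted_err (S j) t i q - weighted_err (S j) (lo (S j)) i q)
       + (weighted_err (S j) (lo (S j)) i q - weighted_err j (hi j) i q)
       + (weighted_err j (hi j) i q - err (hi 0) i q)) by ring.
    eapply Rle_trans; [apply Rabs_triang|].
    eapply Rle_trans; [apply Rplus_le_compat_r, Rabs_triang|]. lra.
Qed.

Lemma transport_le_start : Rabs transport <= cellmax m n K * exp (- decay_rate * (ss - s0)).
Proof.
  pose proof (psi_loc_range js ts ts_piece) as Hss. fold ss in Hss.
  assert (Hs0 : s0 <= ss)
    by (pose proof (s_k_le th th_incr l0 (piece js - 1) ltac:(unfold piece; lia)); unfold s0; lra).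
  pose proof (transport_le l0 s0 ltac:(unfold piece; lia)
    ltac:(unfold s0; pose proof (s_k_le th th_incr (l0 - 1) l0 ltac:(lia)); lra) Hs0) as Htr.
  unfold jump_prod in Htr. rewrite prodZ_empty, Rabs_R1, Rmult_1_r in Htr by lia.
  rewrite Rminus_diag, Rmult_0_r, exp_0, Rmult_1_l in Htr.
  eapply Rle_trans; [exact Htr|]. apply Rmult_le_compat; try lra.
  - left; apply K_pos; auto.
  - left; apply exp_pos.
  - apply cellmax_ge; auto.
  - apply exp_lam_ij_le; auto; lra.
Qed.

Lemma err_eq_weighted_transport : err ts i q = weighted_err js ts i q * transport.
Proof.
  unfold weighted_err, transport. fold ss.
  assert (jump_prod th a i q l0 (piece js - 1) <> 0) by (apply jump_prod_neq0; auto).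
  replace (exp (- a i q * (ss - s0))) with (/ exp (a i q * (ss - s0)))
    by (rewrite <- exp_Ropp; f_equal; ring).
  field. split; [apply Rgt_not_eq, exp_pos|auto].
Qed.

Lemma err_lt_envelope_at : Rabs (err ts i q) < envelope js ts.
Proof.
  pose proof transport_pos as HT. pose proof cellmax_K_pos.
  set (e := exp (- decay_rate * (ss - s0))). assert (He : 0 < e) by apply exp_pos.
  assert (Henv : comparison Cst js ts * Rabs transport = envelope js ts).
  { rewrite comparison_Cst. fold ss. rewrite Rminus_diag, Rmult_0_r, exp_0. field. lra. }
  assert (HCst : Cst * Rabs transport = B0 * e) by (unfold Cst; fold e; field; lra).
  assert (Hstart : Rabs (err (hi 0) i q) * Rabs transport < B0 * e).
  { pose proof (err_start_lt i q iq_cell). pose proof (Rabs_pos (err (hi 0) i q)).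
    pose proof transport_le_start. fold e in H2. nra. }
  assert (Hw : Rabs (weighted_err js ts i q) <= Rabs (err (hi 0) i q) + (comparison Cst js ts - Cst)).
  { pose proof (weighted_err_increment_le js ts (le_n _) ts_piece (Rle_refl _)).
    replace (weighted_err js ts i q) with ((weighted_err js ts i q - err (hi 0) i q) + err (hi 0) i q)
      by ring.
    eapply Rle_trans; [apply Rabs_triang|]. lra. }
  apply Rmult_le_compat_r with (r := Rabs transport) in Hw; [|lra].
  rewrite Rmult_plus_distr_r, Rmult_minus_distr_r, Henv, HCst in Hw.
  rewrite err_eq_weighted_transport, Rabs_mult. lra.
Qed.
End Step.

Lemma err_lt_envelope j t : lo j <= t <= hi j ->
  forall h l, in_cell m n h l -> Rabs (err t h l) < envelope j t.
Proof.
  revert t. induction j as [j IH] using (well_founded_induction lt_wf). intros t Ht.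
  destruct j as [|j].
  - simpl in Ht. replace t with (hi 0) by lra. rewrite envelope_start. intros h l Hc.
    pose proof (err_start_lt h l Hc). pose proof cellmax_K_pos.
    pose proof (Rabs_pos (err (hi 0) h l)). nra.
  - apply (continuous_induction (lo (S j)) (hi (S j))
      (fun t => forall h l, in_cell m n h l -> Rabs (err t h l) < envelope (S j) t));
      [apply lo_le_hi| | |auto].
    + intros u Hu Hbelow h l Hc. apply err_lt_envelope_at; auto; [lia|].
      intros j0 t1 Hj0 Ht1 Ht1u h1 l1 Hc1. apply Rlt_le.
      destruct (Nat.eq_dec j0 (S j)) as [->|Hne]; [apply Hbelow; auto; lra|].
      apply (IH j0); auto; lia.
    + intros u Hu Hupto.
      destruct (uniform_radius_over_cells m n (fun h l d => forall v, u < v < u + d ->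
          v <= hi (S j) -> Rabs (err v h l) < envelope (S j) v)) as [d [Hd Hunif]].
      * intros h l d d' Hdd Hd' v Hv Hvhi. apply Hdd; auto; lra.
      * intros h l Hc.
        assert (Hgap : 0 < envelope (S j) u - Rabs (err u h l)) by (pose proof (Hupto u ltac:(lra) h l Hc); lra).
        set (gap := envelope (S j) u - Rabs (err u h l)) in *.
        destruct (has_deriv_within_continuous _ _ _ _ _ (err_deriv j u h l ltac:(lra) Hc) (gap / 2))
          as [d1 [Hd1 Q1]]; [lra|].
        destruct (envelope_continuous (S j) u (gap / 2)) as [d2 [Hd2 Q2]]; [lra|].
        exists (Rmin d1 d2); split; [apply Rmin_pos; auto|].
        intros v Hv Hvhi. pose proof (Rmin_l d1 d2). pose proof (Rmin_r d1 d2).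
        assert (Hvu : Rabs (v - u) < Rmin d1 d2) by (rewrite Rabs_right; lra).
        specialize (Q1 v ltac:(lra) ltac:(lra)). specialize (Q2 v ltac:(lra)).
        pose proof (Rabs_triang_inv (err v h l) (err u h l)).
        apply Rabs_def2 in Q2. unfold gap in *. lra.
      * exists d; split; auto.
Qed.

(* The net rate per piece: a period of [p] pieces lasts [psi omega] and has [p] jumps. *)
Let decay_exponent := (coupling_gain - decay_rate) * psi_omega th p / INR p + ln jump_growth.

Lemma decay_exponent_neg : decay_exponent < 0.
Proof.
  pose proof (psi_omega_pos th th_incr omega p p_pos th_periodic) as Hpsi.
  assert (Hp : 0 < INR p) by (apply lt_0_INR; lia).
  replace decay_exponent with
    (psi_omega th p / INR p * (- decay_rate + coupling_gain + INR p / psi_omega th p * ln jump_growth))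
    by (unfold decay_exponent; field; lra).
  rewrite <- (Rmult_0_r (psi_omega th p / INR p)).
  apply Rmult_lt_compat_l; [apply Rdiv_lt_0_compat; auto|exact C6].
Qed.

Lemma gain_lt_decay : coupling_gain - decay_rate < 0.
Proof.
  pose proof decay_exponent_neg. pose proof (psi_omega_pos th th_incr omega p p_pos th_periodic).
  assert (Hp : 0 < INR p) by (apply lt_0_INR; lia).
  assert (Hln : 0 <= ln jump_growth).
  { rewrite <- ln_1. pose proof jump_growth_ge1.
    destruct (Req_dec jump_growth 1) as [->|]; [lra|left; apply ln_increasing; lra]. }
  destruct (Rlt_dec (coupling_gain - decay_rate) 0) as [|Hn]; auto. exfalso.
  assert (0 <= (coupling_gain - decay_rate) * psi_omega th p / INR p); [|unfold decay_exponent in *; lra].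
  apply Rmult_le_pos; [apply Rmult_le_pos; lra|left; apply Rinv_0_lt_compat; auto].
Qed.

Lemma envelope_le j t : (1 <= j)%nat -> lo j <= t <= hi j ->
  envelope j t
  <= B0 * exp (- (coupling_gain - decay_rate) * (1 / INR p + 1) * psi_omega th p
               + INR j * decay_exponent).
Proof.
  intros Hj Ht. pose proof gain_lt_decay. pose proof jump_growth_ge1.
  pose proof (psi_omega_pos th th_incr omega p p_pos th_periodic).
  assert (Hp : 0 < INR p) by (apply lt_0_INR; lia).
  pose proof (psi_loc_range j t Ht) as [Hpsi _].
  pose proof (s_k_growth th th_incr omega p p_pos th_periodic l0 (j - 1)) as Hgrowth.
  replace (l0 + Z.of_nat (j - 1))%Z with (piece j - 1)%Z in Hgrowth by (unfold piece; lia).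
  rewrite minus_INR in Hgrowth by lia. simpl INR in Hgrowth.
  assert (Hexp : (coupling_gain - decay_rate) * (psi_loc j t - s0)
    <= (coupling_gain - decay_rate) * ((INR j - 1) / INR p - 1) * psi_omega th p).
  { rewrite Rmult_assoc. apply Rmult_le_compat_neg_l; [lra|]. unfold s0. lra. }
  unfold envelope. rewrite <- (exp_ln (jump_growth ^ j)) by (apply pow_lt; lra).
  rewrite ln_pow, Rmult_assoc, <- exp_plus by lra.
  apply Rmult_le_compat_l; [left; apply B0_pos|]. apply exp_le_compat.
  unfold decay_exponent.
  replace ((coupling_gain - decay_rate) * ((INR j - 1) / INR p - 1) * psi_omega th p)
    with (- (coupling_gain - decay_rate) * (1 / INR p + 1) * psi_omega th p
          + INR j * ((coupling_gain - decay_rate) * psi_omega th p / INR p)) in Hexp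
    by (field; lra).
  lra.
Qed.

Lemma late_point_in_piece t N : inT0 th t -> lo (S N) <= t ->
  exists j, (S N <= j)%nat /\ lo j <= t <= hi j.
Proof.
  intros [k Hk] HT.
  assert (Hk2 : (piece (S N) <= k)%Z).
  { destruct (Z_le_dec (piece (S N)) k) as [|Hnk]; auto. exfalso.
    assert (th (2 * k)%Z < lo (S N)); [|lra].
    rewrite lo_succ. apply (Zincr_lt th th_incr). unfold piece in *. lia. }
  exists (Z.to_nat (k - l0)). split; [unfold piece in Hk2; lia|].
  destruct (Z.to_nat (k - l0)) as [|j] eqn:Hj; [unfold piece in Hk2; lia|].
  rewrite lo_succ. unfold hi.
  replace (piece (S j)) with k by (unfold piece; lia).
  replace (2 * piece j + 1)%Z with (2 * k - 1)%Z by (unfold piece; lia). exact Hk.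
Qed.

Lemma error_tends_to_zero : forall eps, 0 < eps -> exists T, forall t, inT0 th t -> T <= t ->
  vnorm m n (vsub (x t) (phi t)) < eps.
Proof.
  intros eps Heps.
  destruct (exp_linear_eventually_lt B0
    (- (coupling_gain - decay_rate) * (1 / INR p + 1) * psi_omega th p) decay_exponent eps
    B0_pos decay_exponent_neg Heps) as [N HN].
  exists (lo (S N)). intros t Ht HT.
  destruct (late_point_in_piece t N Ht HT) as [j [Hj Htj]].
  apply cellmax_lt; auto. intros i q Hc.
  eapply Rlt_le_trans; [apply (err_lt_envelope j t Htj i q Hc)|].
  eapply Rle_trans; [apply envelope_le; auto; lia|]. left. apply HN. lia.
Qed.
End Convergence.

Theorem lemma2 (m n r : nat) (a : nat -> nat -> R) (C : nat -> nat -> nat -> nat -> R)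
  (f : R -> R) (th : Z -> R) (omega : R) (p : nat)
  (Lam : vec -> Prop) (F : vec -> vec) (zeta : Z -> vec)
  (K : nat -> nat -> R) (Mf Lf MF : R)
  (phi x : R -> vec) (t0 : R) :
  (1 <= m)%nat -> (1 <= n)%nat ->
  (forall i j, in_cell m n i j -> 0 < a i j) ->
  (forall i j h l, in_cell m n i j -> in_cell m n h l -> 0 <= C i j h l) ->
  continuity f ->
  (forall k, th k < th (k + 1)%Z) -> th (-1)%Z < 0 -> 0 < th 0%Z ->
  0 < omega -> (1 <= p)%nat ->
  (forall k, th (k + 2 * Z.of_nat p)%Z = th k + omega) ->
  seq_compact m n Lam -> (forall v, Lam v -> Lam (F v)) -> cont_on m n Lam F ->
  (* zeta in Theta *)
  (forall k, Lam (zeta k) /\ zeta (k + 1)%Z = F (zeta k)) ->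
  (* (C1) *)
  (forall i j k, in_cell m n i j -> delta_k th k * a i j <> 1) ->
  (* (C2) *)
  0 < lam m n th p a ->
  (* the fixed constants K_ij *)
  (forall i j, in_cell m n i j -> 0 < K i j) ->
  (forall i j (l k : Z) (s tau : R), in_cell m n i j ->
     s_k th (l - 1)%Z < tau <= s_k th l -> s_k th k < s <= s_k th (k + 1)%Z -> tau <= s ->
     Rabs (ufun th a i j l k s tau) <= K i j * exp (- lam_ij th p a i j * (s - tau))) ->
  (* (C3) *)
  0 < Mf -> (forall s, Rabs (f s) <= Mf) ->
  (* (C4) *)
  0 < Lf -> (forall s1 s2, Rabs (f s1 - f s2) <= Lf * Rabs (s1 - s2)) ->
  (* M_F = max_{eta in Lambda} ||F(eta)|| *)
  (exists eta, Lam eta /\ vnorm m n (F eta) = MF) ->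
  (forall eta, Lam eta -> vnorm m n (F eta) <= MF) ->
  (* (C5) *)
  (Mf + H0 m n r th p a K C Mf MF * Lf) * cbar m n r th p a K C < 1 ->
  (* (C6) *)
  - lam m n th p a + dbar m n r th p a K C Mf Lf MF
    + INR p / psi_omega th p * ln (1 + delta_max th p * dbar m n r th p a K C Mf Lf MF) < 0 ->
  (* phi = phi_zeta: the solution of (N_zeta) on T0 bounded by H0 *)
  sol_T0 m n r a C f th zeta phi ->
  (forall t, inT0 th t -> vnorm m n (phi t) <= H0 m n r th p a K C Mf MF) ->
  (* x: a solution on T0 /\ [t0, oo) *)
  inT0 th t0 -> sol_from m n r a C f th zeta t0 x ->
  forall eps, 0 < eps -> exists T, forall t, inT0 th t -> t0 <= t -> T <= t ->
    vnorm m n (vsub (x t) (phi t)) < eps.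
Proof.
  (* (C2), (C5), the compactness of Lambda and zeta in Theta only serve to construct phi_zeta,
     which is given here. *)
  intros Hm Hn _ HC _ Hinc _ _ _ Hp Hper _ _ _ _ HC1 _ HK HKu HMf HfM HLf HfL _ _ _ HC6
    Hphi HphiB [l0 Hl0] Hx eps Heps.
  destruct (error_tends_to_zero m n r a C f th omega p zeta K Mf Lf MF phi x t0 l0
    Hm Hn HC Hinc Hp Hper HC1 HK HKu HMf HfM HLf HfL HC6 Hphi HphiB Hx Hl0 eps Heps) as [T HT].
  exists T. intros t Ht _ HTt. apply HT; auto.
Qed.
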